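(* Let $X=\varprojlim X_np_n$ be a reduced regular projective limit of Fréchet lattices $X_n$, with the projective limit topology, $X_0\subset X$ a vector subspace, $q_1\colon X_1\to\mathbb R$ a positive affine function, $q:=q_1\circ\operatorname{pr}_1$, and $H\subset X$ a sequentially closed convex set. Suppose that for each $n$ either (i) $\operatorname{pr}_nH$ is minorizing for $\operatorname{pr}_nX_0$, or (ii) the sup-projection $f_n(x_n)=\sup\{\mathrm{spf}_{H,q}(x):\ x\in X,\ \operatorname{pr}_nx=x_n\}$ is upper semicontinuous on $\operatorname{pr}_nX_0$; and that (iii) for every at most countable $B\subset H$ bounded above in $X$ with $\inf q(B)>-\infty$ there is $n_q$ such that $\operatorname{pr}_nB$ is sequentially precompact in $X_n$ for all $n\ge n_q$. Then $\mathrm{spf}_{H,q}$ is concave with values in $\mathbb R\cup\{-\infty\}$ and for all $x\in X_0$ $$\mathrm{spf}_{H,q}(x)=\inf\{a(x):\ a\colon X_0\to\mathbb R\ \text{affine},\ q(h)\le a(x')\ \text{for all }h\in H,\ x'\in X_0,\ h\le x'\}.$$ If in addition $0\in H$ and $q_1(0)\ge0$, then $\mathrm{spf}_{H,q}$ is positive and the affine functions $a$ may be restricted to those of the form $l+c$ with $l\colon X_0\to\mathbb R$ positive linear and $c\ge0$.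
   Context: All vector spaces are real. Projective limit: for ordered vector spaces $(X_n,\le_n)$ and positive linear $p_n\colon X_{n+1}\to X_n$, $X=\varprojlim X_np_n=\{x=(x_n)\in\prod X_n:\ x_n=p_n(x_{n+1})\ \forall n\}$ with coordinatewise order, $\operatorname{pr}_nx=x_n$; regular if all $X_n$ are vector lattices and each $p_n$ preserves suprema of finite sets; reduced if $\operatorname{pr}_nX=X_n$ for all $n$. A Fréchet lattice is a vector lattice that is a Fréchet space with a base of zero neighbourhoods $V$ such that $x\in V$, $|x'|\le|x|$ imply $x'\in V$. The topology on $X$ is induced from the product topology. Affine: $a(tx_1+(1-t)x_2)=ta(x_1)+(1-t)a(x_2)$; positive: $\ge0$ on positive vectors. Supremal function: $\mathrm{spf}_{H,q}(x)=\sup\{q(h):\ h\in H,\ h\le x\}$, $\sup\varnothing=-\infty$. *)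

From Stdlib Require Import Reals Lra ClassicalEpsilon.
Open Scope R_scope.

Inductive Rbar := Finite (r : R) | p_infty | m_infty.

Definition Rbar_le (a b : Rbar) : Prop :=
  match a, b with
  | m_infty, _ => True
  | _, p_infty => True
  | Finite x, Finite y => x <= y
  | _, _ => False
  end.

Definition Rbar_lt (a b : Rbar) : Prop := Rbar_le a b /\ a <> b.

Definition Rbar_is_sup (E : Rbar -> Prop) (s : Rbar) : Prop :=
  (forall e, E e -> Rbar_le e s) /\
  (forall u, (forall e, E e -> Rbar_le e u) -> Rbar_le s u).

Definition Rbar_is_inf (E : Rbar -> Prop) (s : Rbar) : Prop :=
  (forall e, E e -> Rbar_le s e) /\
  (forall u, (forall e, E e -> Rbar_le u e) -> Rbar_le u s).

(* supremum / infimum in the complete lattice of extended reals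
   (sup of the empty set = -oo, inf of the empty set = +oo) *)
Definition Rbar_sup (E : Rbar -> Prop) : Rbar :=
  epsilon (inhabits m_infty) (Rbar_is_sup E).
Definition Rbar_inf (E : Rbar -> Prop) : Rbar :=
  epsilon (inhabits m_infty) (Rbar_is_inf E).

Record VectorLattice := {
  car :> Type;
  vadd : car -> car -> car;
  vscal : R -> car -> car;
  vzero : car;
  vopp : car -> car;
  vadd_assoc : forall x y z, vadd x (vadd y z) = vadd (vadd x y) z;
  vadd_comm : forall x y, vadd x y = vadd y x;
  vadd_0 : forall x, vadd x vzero = x;
  vadd_opp : forall x, vadd x (vopp x) = vzero;
  vscal_1 : forall x, vscal 1 x = x;
  vscal_assoc : forall a b x, vscal a (vscal b x) = vscal (a * b) x;
  vscal_distr_v : forall a x y, vscal a (vadd x y) = vadd (vscal a x) (vscal a y);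
  vscal_distr_s : forall a b x, vscal (a + b) x = vadd (vscal a x) (vscal b x);
  vle : car -> car -> Prop;
  vle_refl : forall x, vle x x;
  vle_trans : forall x y z, vle x y -> vle y z -> vle x z;
  vle_antisym : forall x y, vle x y -> vle y x -> x = y;
  vle_add : forall x y z, vle x y -> vle (vadd x z) (vadd y z);
  vle_scal : forall a x, 0 <= a -> vle vzero x -> vle vzero (vscal a x);
  vsup : car -> car -> car;
  vsup_ub_l : forall x y, vle x (vsup x y);
  vsup_ub_r : forall x y, vle y (vsup x y);
  vsup_least : forall x y z, vle x z -> vle y z -> vle (vsup x y) z
}.

Arguments vadd {v} _ _.
Arguments vscal {v} _ _.
Arguments vzero {v}.
Arguments vopp {v} _.
Arguments vle {v} _ _.
Arguments vsup {v} _ _.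

Definition vsub {V : VectorLattice} (x y : V) : V := vadd x (vopp y).
Definition vabs {V : VectorLattice} (x : V) : V := vsup x (vopp x).

Definition nbhd0 {V : VectorLattice} (s : nat -> V -> R) (W : V -> Prop) : Prop :=
  exists (k : nat) (eps : R), 0 < eps /\
    forall x, (forall i, (i <= k)%nat -> s i x < eps) -> W x.

Definition solid {V : VectorLattice} (W : V -> Prop) : Prop :=
  forall x x', W x -> vle (vabs x') (vabs x) -> W x'.

Definition sconv {V : VectorLattice} (s : nat -> V -> R) (u : nat -> V) (y : V) : Prop :=
  forall W, nbhd0 s W -> exists N, forall m, (N <= m)%nat -> W (vsub (u m) y).

Definition scauchy {V : VectorLattice} (s : nat -> V -> R) (u : nat -> V) : Prop :=
  forall W, nbhd0 s W -> exists N, forall m k, (N <= m)%nat -> (N <= k)%nat ->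
    W (vsub (u m) (u k)).

(* Frechet lattice: vector lattice with a complete metrizable locally convex
   (Hausdorff) topology, generated by countably many seminorms, having a base
   of solid zero neighbourhoods. *)
Record FrechetLattice := {
  FL_VL :> VectorLattice;
  sn : nat -> FL_VL -> R;
  sn_nonneg : forall k x, 0 <= sn k x;
  sn_triangle : forall k x y, sn k (vadd x y) <= sn k x + sn k y;
  sn_homog : forall k a x, sn k (vscal a x) = Rabs a * sn k x;
  sn_sep : forall x, (forall k, sn k x = 0) -> x = vzero;
  FL_complete : forall u, scauchy sn u -> exists y, sconv sn u y;
  FL_solid_base : forall W, nbhd0 sn W ->
    exists V, nbhd0 sn V /\ solid V /\ forall x, V x -> W x
}.

Definition conv {F : FrechetLattice} (u : nat -> F) (y : F) : Prop := sconv (sn F) u y.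

Definition seq_precompact {F : FrechetLattice} (A : F -> Prop) : Prop :=
  forall u : nat -> F, (forall m, A (u m)) ->
    exists (phi : nat -> nat) (y : F),
      (forall m, (phi m < phi (S m))%nat) /\ conv (fun m => u (phi m)) y.

Definition usc_on {F : FrechetLattice} (D : F -> Prop) (f : F -> Rbar) : Prop :=
  forall y, D y -> forall c : R, Rbar_lt (f y) (Finite c) ->
    exists W, nbhd0 (sn F) W /\
      forall z, D z -> W (vsub z y) -> Rbar_lt (f z) (Finite c).

(* X n stands for the space X_{n+1} of the paper; p n : X_{n+2} -> X_{n+1} *)
Definition PT (X : nat -> FrechetLattice) : Type := forall n, X n.

Definition inLim (X : nat -> FrechetLattice) (p : forall n, X (S n) -> X n)
  (x : PT X) : Prop := forall n, x n = p n (x (S n)).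

Definition pleT {X : nat -> FrechetLattice} (x y : PT X) : Prop :=
  forall n, vle (x n) (y n).
Definition paddT {X : nat -> FrechetLattice} (x y : PT X) : PT X :=
  fun n => vadd (x n) (y n).
Definition pscalT {X : nat -> FrechetLattice} (a : R) (x : PT X) : PT X :=
  fun n => vscal a (x n).
Definition pzeroT {X : nat -> FrechetLattice} : PT X := fun n => vzero.

(* convergence in the (induced) product topology: coordinatewise *)
Definition convT {X : nat -> FrechetLattice} (u : nat -> PT X) (x : PT X) : Prop :=
  forall n, conv (fun m => u m n) (x n).

Definition positive_linear {V W : VectorLattice} (f : V -> W) : Prop :=
  (forall x y, f (vadd x y) = vadd (f x) (f y)) /\
  (forall a x, f (vscal a x) = vscal a (f x)) /\
  (forall x, vle vzero x -> vle vzero (f x)).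

Definition spf {X : nat -> FrechetLattice} (H : PT X -> Prop) (q : PT X -> R)
  (x : PT X) : Rbar :=
  Rbar_sup (fun e => exists h, H h /\ pleT h x /\ e = Finite (q h)).

Definition concave_Rbar_on {X : nat -> FrechetLattice} (D : PT X -> Prop)
  (f : PT X -> Rbar) : Prop :=
  (forall x, D x -> f x <> p_infty) /\
  (forall x y t rx ry, D x -> D y -> 0 < t < 1 ->
     f x = Finite rx -> f y = Finite ry ->
     Rbar_le (Finite (t * rx + (1 - t) * ry))
             (f (paddT (pscalT t x) (pscalT (1 - t) y)))).

From Stdlib Require Import Reals Lra Lia ClassicalEpsilon Classical FunctionalExtensionality List.
From mathcomp Require classical_sets boolp.
Open Scope R_scope.

(* Write q = q1 o pr_1 and f = spf_{H,q}.  Since q is monotone (positive affine),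
   f <= q, so f never takes the value +oo, and convexity of H makes f concave.
   Both dual formulas reduce to: for x in X0 and r > f(x) there is an affine
   majorant a of q on {(h, x') : h in H, x' in X0, h <= x'} with a(x) < r.
   1. Compactness: h_j in H below x with q(h_j) > r' are bounded above in X (by
      regularity), so by (iii) a diagonal subsequence converges coordinatewise;
      the limit lies in H, below x, with q >= r' (positive linear maps between
      Frechet lattices are continuous).  Hence the sup-projection f_n(x_n) is
      already < r for some n.
   2. f_n o pr_n is a concave majorant of f on X0.  Under (i) it is finite on
      X0; under (ii) it is replaced by a finite concave sup-convolution with a
      penalty built from the seminorms of X_n, still < r at x by upper
      semicontinuity.
   3. Hahn-Banach: a real concave function on a vector space has an affine
      majorant touching it at any prescribed point.
   When 0 in H and q1(0) >= 0, a majorant a splits as (a - a(0)) + a(0) with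
   a - a(0) positive linear and a(0) >= 0, giving the positive form. *)

Lemma Rbar_le_refl a : Rbar_le a a.
Proof. destruct a; simpl; auto; lra. Qed.

Lemma Rbar_le_trans a b c : Rbar_le a b -> Rbar_le b c -> Rbar_le a c.
Proof. destruct a, b, c; simpl; auto; try tauto; lra. Qed.

Lemma Rbar_le_antisym a b : Rbar_le a b -> Rbar_le b a -> a = b.
Proof. destruct a, b; simpl; try tauto; intros; f_equal; lra. Qed.

Lemma Rbar_not_le a b : ~ Rbar_le a b -> Rbar_lt b a.
Proof.
intros H; split.
- destruct a, b; simpl in *; auto; try tauto; lra.
- intros ->; apply H, Rbar_le_refl.
Qed.

Lemma Rbar_lt_not_le a b : Rbar_lt a b -> ~ Rbar_le b a.
Proof. intros [H1 H2] H3; apply H2, Rbar_le_antisym; auto. Qed.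

Lemma Rbar_lt_le_trans a b c : Rbar_lt a b -> Rbar_le b c -> Rbar_lt a c.
Proof.
intros [H1 H3] H2; split; [eapply Rbar_le_trans; eauto|].
intros ->; apply H3, Rbar_le_antisym; auto.
Qed.

Lemma Rbar_le_lt_trans a b c : Rbar_le a b -> Rbar_lt b c -> Rbar_lt a c.
Proof.
intros H1 [H2 H3]; split; [eapply Rbar_le_trans; eauto|].
intros ->; apply H3, Rbar_le_antisym; auto.
Qed.

Lemma Rbar_lt_fin r s : Rbar_lt (Finite r) (Finite s) <-> r < s.
Proof.
split.
- intros [H1 H2]; simpl in H1. destruct (Req_dec r s); [subst; tauto|lra].
- intros H; split; simpl; [lra|intros E; inversion E; lra].
Qed.

Lemma Rbar_le_dec a b : Rbar_le a b \/ Rbar_lt b a.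
Proof. destruct (classic (Rbar_le a b)); [left|right; apply Rbar_not_le]; auto. Qed.

Lemma Rbar_lt_exists_real a b : Rbar_lt a b ->
  exists r, Rbar_lt a (Finite r) /\ Rbar_lt (Finite r) b.
Proof.
intros H. destruct a as [x| |], b as [y| |].
- apply Rbar_lt_fin in H. exists ((x+y)/2); split; apply Rbar_lt_fin; lra.
- exists (x+1); split; [apply Rbar_lt_fin; lra|split; simpl; auto; discriminate].
- destruct H as [H _]; simpl in H; tauto.
- destruct H as [H1 H2]; simpl in H1; tauto.
- destruct H as [H1 H2]; tauto.
- destruct H as [H1 H2]; simpl in H1; tauto.
- exists (y-1); split; [split; simpl; auto; discriminate|apply Rbar_lt_fin; lra].
- exists 0; split; split; simpl; auto; discriminate.
- destruct H as [H1 H2]; tauto.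
Qed.

Lemma Rbar_sup_exists (E : Rbar -> Prop) : exists s, Rbar_is_sup E s.
Proof.
destruct (classic (E p_infty \/ forall M : R, exists r, E (Finite r) /\ M < r)) as [Hp|Hp].
- exists p_infty; split; [intros e _; destruct e; simpl; auto|].
  intros u Hu. destruct Hp as [Hp|Hp].
  + apply Hu in Hp; exact Hp.
  + destruct u as [u| |]; simpl; auto.
    * destruct (Hp u) as [r [Hr1 Hr2]]. apply Hu in Hr1; simpl in Hr1; lra.
    * destruct (Hp 0) as [r [Hr1 Hr2]]. apply Hu in Hr1; simpl in Hr1; tauto.
- apply not_or_and in Hp; destruct Hp as [Hp1 Hp2].
  apply not_all_ex_not in Hp2; destruct Hp2 as [M HM].
  assert (HB : forall r, E (Finite r) -> r <= M).
  { intros r Hr. destruct (Rle_dec r M); auto. exfalso; apply HM; exists r; split; auto; lra. }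
  destruct (classic (exists r, E (Finite r))) as [Hne|Hne].
  + destruct (completeness (fun r => E (Finite r))) as [m [Hm1 Hm2]].
    * exists M; intros r Hr; auto.
    * exact Hne.
    * exists (Finite m); split.
      -- intros e He; destruct e as [r| |]; simpl; auto; try (apply Hm1; auto).
      -- intros u Hu. destruct u as [u| |]; simpl; auto.
         ++ apply Hm2; intros r Hr; apply Hu in Hr; simpl in Hr; auto.
         ++ destruct Hne as [r Hr]; apply Hu in Hr; simpl in Hr; auto.
  + exists m_infty; split.
    * intros e He; destruct e as [r| |]; simpl; auto; apply Hne; eauto.
    * intros u _; simpl; auto.
Qed.

Lemma Rbar_sup_spec E : Rbar_is_sup E (Rbar_sup E).
Proof. unfold Rbar_sup. apply epsilon_spec. apply Rbar_sup_exists. Qed.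

Lemma Rbar_sup_ub E e : E e -> Rbar_le e (Rbar_sup E).
Proof. intros H; apply (proj1 (Rbar_sup_spec E)); auto. Qed.

Lemma Rbar_sup_lub E u : (forall e, E e -> Rbar_le e u) -> Rbar_le (Rbar_sup E) u.
Proof. intros H; apply (proj2 (Rbar_sup_spec E)); auto. Qed.

Lemma Rbar_sup_approx E a : Rbar_lt a (Rbar_sup E) -> exists e, E e /\ Rbar_lt a e.
Proof.
intros H. apply NNPP; intros Hn.
assert (Rbar_le (Rbar_sup E) a).
{ apply Rbar_sup_lub. intros e He. destruct (Rbar_le_dec e a) as [H1|H1]; auto.
  exfalso; apply Hn; eauto. }
eapply Rbar_lt_not_le; eauto.
Qed.

Definition Rbar_opp (a : Rbar) : Rbar :=
  match a with Finite r => Finite (- r) | p_infty => m_infty | m_infty => p_infty end.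

Lemma Rbar_opp_le a b : Rbar_le (Rbar_opp a) (Rbar_opp b) <-> Rbar_le b a.
Proof. destruct a, b; simpl; try tauto; split; intros; lra. Qed.

Lemma Rbar_opp_opp a : Rbar_opp (Rbar_opp a) = a.
Proof. destruct a; simpl; auto; f_equal; ring. Qed.

Lemma Rbar_inf_exists (E : Rbar -> Prop) : exists s, Rbar_is_inf E s.
Proof.
destruct (Rbar_sup_exists (fun e => E (Rbar_opp e))) as [s [H1 H2]].
exists (Rbar_opp s); split.
- intros e He. apply Rbar_opp_le. rewrite Rbar_opp_opp. apply H1. rewrite Rbar_opp_opp; auto.
- intros u Hu. rewrite <- (Rbar_opp_opp u). apply Rbar_opp_le. apply H2.
  intros e He. rewrite <- (Rbar_opp_opp e). apply Rbar_opp_le. apply Hu; auto.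
Qed.

Lemma Rbar_inf_unique E a : Rbar_is_inf E a -> Rbar_inf E = a.
Proof.
intros Ha. assert (Hb : Rbar_is_inf E (Rbar_inf E)).
{ unfold Rbar_inf; apply epsilon_spec; apply Rbar_inf_exists. }
apply Rbar_le_antisym.
- apply Ha; apply Hb.
- apply Hb; apply Ha.
Qed.

Lemma Rbar_inf_approx (E : Rbar -> Prop) (s : Rbar) :
  (forall e, E e -> Rbar_le s e) ->
  (forall r, Rbar_lt s (Finite r) -> exists a, E (Finite a) /\ a < r) ->
  Rbar_inf E = s.
Proof.
intros Hlow Happ. apply Rbar_inf_unique. split; [exact Hlow|].
intros u Hu. destruct (Rbar_le_dec u s) as [Hle|Hlt]; [exact Hle|exfalso].
destruct (Rbar_lt_exists_real _ _ Hlt) as [r [Hr1 Hr2]].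
destruct (Happ r Hr1) as [a [Ha Har]].
pose proof (Rbar_lt_le_trans _ _ _ Hr2 (Hu _ Ha)) as Hc. apply Rbar_lt_fin in Hc. lra.
Qed.

Lemma Rbar_le_eps r F : (forall eps, 0 < eps -> Rbar_le (Finite (r - eps)) F) ->
  Rbar_le (Finite r) F.
Proof.
intros H. destruct F as [f| |]; simpl in *; auto.
- destruct (Rle_dec r f); auto. specialize (H ((r - f)/2)). simpl in H. lra.
- specialize (H 1 Rlt_0_1); simpl in H; auto.
Qed.

Arguments vadd_assoc {v} _ _ _.
Arguments vadd_comm {v} _ _.
Arguments vadd_0 {v} _.
Arguments vadd_opp {v} _.
Arguments vscal_1 {v} _.
Arguments vscal_assoc {v} _ _ _.
Arguments vscal_distr_v {v} _ _ _.
Arguments vscal_distr_s {v} _ _ _.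
Arguments vle_refl {v} _.
Arguments vle_trans {v} _ _ _ _ _.
Arguments vle_antisym {v} _ _ _ _.
Arguments vle_add {v} _ _ _ _.
Arguments vle_scal {v} _ _ _ _.
Arguments vsup_ub_l {v} _ _.
Arguments vsup_ub_r {v} _ _.
Arguments vsup_least {v} _ _ _ _ _.

Section VL.
Context {V : VectorLattice}.
Implicit Types x y z u w : V.

Lemma vadd_0l x : vadd vzero x = x.
Proof. rewrite vadd_comm; apply vadd_0. Qed.

Lemma vadd_opp_l x : vadd (vopp x) x = vzero.
Proof. rewrite vadd_comm; apply vadd_opp. Qed.

Lemma vadd_cancel_r x y z : vadd x z = vadd y z -> x = y.
Proof.
intros H. rewrite <- (vadd_0 x), <- (vadd_0 y), <- (vadd_opp z), !vadd_assoc, H; auto.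
Qed.

Lemma vadd_cancel_l x y z : vadd z x = vadd z y -> x = y.
Proof. rewrite (vadd_comm z x), (vadd_comm z y); apply vadd_cancel_r. Qed.

Lemma vscal_0 x : vscal 0 x = vzero.
Proof.
apply (vadd_cancel_r _ _ (vscal 0 x)). rewrite vadd_0l, <- vscal_distr_s, Rplus_0_r; auto.
Qed.

Lemma vscal_zero a : vscal a (@vzero V) = vzero.
Proof.
apply (vadd_cancel_r _ _ (vscal a vzero)). rewrite vadd_0l, <- vscal_distr_v, vadd_0; auto.
Qed.

Lemma vopp_unique x y : vadd x y = vzero -> y = vopp x.
Proof.
intros H. apply (vadd_cancel_l _ _ x). rewrite H, vadd_opp; auto.
Qed.

Lemma vscal_m1 x : vscal (-1) x = vopp x.
Proof.
apply vopp_unique. rewrite <- (vscal_1 x) at 1. rewrite <- vscal_distr_s, Rplus_opp_r, vscal_0; auto.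
Qed.

Lemma vopp_opp x : vopp (vopp x) = x.
Proof. symmetry; apply vopp_unique; apply vadd_opp_l. Qed.

Lemma vopp_add x y : vopp (vadd x y) = vadd (vopp x) (vopp y).
Proof. rewrite <- !vscal_m1; apply vscal_distr_v. Qed.

Lemma vopp_scal a x : vopp (vscal a x) = vscal (- a) x.
Proof. rewrite <- vscal_m1, vscal_assoc; f_equal; ring. Qed.

Lemma vscal_opp a x : vscal a (vopp x) = vscal (- a) x.
Proof. rewrite <- vscal_m1, vscal_assoc; f_equal; ring. Qed.

Lemma vopp_zero : vopp (@vzero V) = vzero.
Proof. rewrite <- vscal_m1; apply vscal_zero. Qed.

Lemma vadd_swap x y z : vadd x (vadd y z) = vadd y (vadd x z).
Proof. rewrite !vadd_assoc, (vadd_comm x y); auto. Qed.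

Lemma vadd_sub x y : vadd y (vsub x y) = x.
Proof. unfold vsub. rewrite vadd_swap, vadd_opp, vadd_0; auto. Qed.

Lemma vsub_opp x y : vopp (vsub x y) = vsub y x.
Proof. unfold vsub. rewrite vopp_add, vopp_opp, vadd_comm; auto. Qed.

Lemma vsub_self x : vsub x x = vzero.
Proof. apply vadd_opp. Qed.

Lemma vsub_trans (a b c : V) : vadd (vsub a b) (vsub b c) = vsub a c.
Proof.
unfold vsub. rewrite <- vadd_assoc, (vadd_assoc (vopp b)), vadd_opp_l, vadd_0l; auto.
Qed.

Lemma vsub_sub_l (c a b : V) : vsub (vsub c a) (vsub c b) = vsub b a.
Proof.
unfold vsub. rewrite vopp_add, vopp_opp. rewrite <- vadd_assoc.
rewrite (vadd_swap (vopp a) (vopp c) b). rewrite vadd_assoc, vadd_opp, vadd_0l, vadd_comm; auto.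
Qed.

Lemma vsub_add_l (P Q A : V) : vsub (vadd P A) Q = vadd (vsub P Q) A.
Proof. unfold vsub. rewrite <- !vadd_assoc, (vadd_comm A); auto. Qed.

Lemma vsub_0 x : vsub x vzero = x.
Proof. unfold vsub; rewrite vopp_zero, vadd_0; auto. Qed.

Lemma vle_add2 x y u w : vle x y -> vle u w -> vle (vadd x u) (vadd y w).
Proof.
intros H1 H2. apply vle_trans with (vadd y u); [apply vle_add; auto|].
rewrite (vadd_comm y u), (vadd_comm y w); apply vle_add; auto.
Qed.

Lemma vle_add_l x y z : vle x y -> vle (vadd z x) (vadd z y).
Proof. intros H; rewrite (vadd_comm z x), (vadd_comm z y); apply vle_add; auto. Qed.

Lemma vle_sub_0 x y : vle x y -> vle vzero (vsub y x).
Proof. intros H. rewrite <- (vadd_opp x). unfold vsub. apply vle_add; auto. Qed.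

Lemma vle_0_sub x y : vle vzero (vsub y x) -> vle x y.
Proof. intros H. rewrite <- (vadd_0l x), <- (vadd_sub y x). rewrite (vadd_comm x). apply vle_add; auto. Qed.

Lemma vle_opp x y : vle x y -> vle (vopp y) (vopp x).
Proof.
intros H. apply vle_0_sub. unfold vsub. rewrite vopp_opp, vadd_comm. apply vle_sub_0; auto.
Qed.

Lemma vle_opp_inv x y : vle (vopp y) (vopp x) -> vle x y.
Proof. intros H; apply vle_opp in H; rewrite !vopp_opp in H; auto. Qed.

Lemma vle_scal_mono a x y : 0 <= a -> vle x y -> vle (vscal a x) (vscal a y).
Proof.
intros Ha H. apply vle_0_sub. unfold vsub. rewrite vopp_scal, <- vscal_opp, <- vscal_distr_v.
apply vle_scal; auto. apply vle_sub_0; auto.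
Qed.

Lemma vsup_comm x y : vsup x y = vsup y x.
Proof.
apply vle_antisym; apply vsup_least; (apply vsup_ub_l || apply vsup_ub_r).
Qed.

Lemma vsup_absorb x y : vle y x -> vsup x y = x.
Proof.
intros H; apply vle_antisym; [apply vsup_least; auto; apply vle_refl|apply vsup_ub_l].
Qed.

Lemma vabs_ge x : vle x (vabs x).
Proof. apply vsup_ub_l. Qed.

Lemma vabs_ge_opp x : vle (vopp x) (vabs x).
Proof. apply vsup_ub_r. Qed.

Lemma vabs_le x w : vle x w -> vle (vopp x) w -> vle (vabs x) w.
Proof. apply vsup_least. Qed.

Lemma vle_half x : vle vzero (vadd x x) -> vle vzero x.
Proof.
intros H. apply (vle_scal (/2)) in H; [|lra].
rewrite <- (vscal_1 x) in H at 1 2. rewrite <- vscal_distr_s, vscal_assoc in H.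
replace (/2 * (1+1)) with 1 in H by field. rewrite vscal_1 in H; auto.
Qed.

Lemma vabs_nonneg x : vle vzero (vabs x).
Proof.
apply vle_half. rewrite <- (vadd_opp x). apply vle_add2; [apply vabs_ge|apply vabs_ge_opp].
Qed.

Lemma vabs_pos x : vle vzero x -> vabs x = x.
Proof.
intros H. apply vsup_absorb. apply vle_trans with vzero; auto.
rewrite <- vopp_zero; apply vle_opp; auto.
Qed.

Lemma vabs_abs x : vabs (vabs x) = vabs x.
Proof. apply vabs_pos, vabs_nonneg. Qed.

Lemma vabs_opp x : vabs (vopp x) = vabs x.
Proof. unfold vabs. rewrite vopp_opp, vsup_comm; auto. Qed.

Lemma vabs_sub_sym x y : vabs (vsub x y) = vabs (vsub y x).
Proof. rewrite <- vsub_opp, vabs_opp; auto. Qed.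

Lemma vsup_le_add (a b c : V) : vle (vsup a c) (vadd (vsup b c) (vabs (vsub a b))).
Proof.
apply vsup_least.
- rewrite <- (vadd_sub a b) at 1. apply vle_add2; [apply vsup_ub_l|apply vabs_ge].
- rewrite <- (vadd_0 c) at 1. apply vle_add2; [apply vsup_ub_r|apply vabs_nonneg].
Qed.

Lemma vle_sub_le x y w : vle x (vadd y w) -> vle (vsub x y) w.
Proof.
intros H. apply vle_0_sub. apply vle_sub_0 in H.
replace (vsub w (vsub x y)) with (vsub (vadd y w) x); auto.
unfold vsub. rewrite vopp_add, vopp_opp.
rewrite (vadd_comm y w), <- !vadd_assoc. f_equal. apply vadd_comm.
Qed.

(* Birkhoff's inequality |a v c - b v c| <= |a - b|: the lattice operations
   are non-expansive, which is what makes the positive cone closed. *)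
Lemma vsup_birkhoff (a b c : V) : vle (vabs (vsub (vsup a c) (vsup b c))) (vabs (vsub a b)).
Proof.
apply vabs_le.
- apply vle_sub_le, vsup_le_add.
- rewrite vsub_opp, vabs_sub_sym. apply vle_sub_le, vsup_le_add.
Qed.

End VL.

Arguments sn_nonneg {f} _ _.
Arguments sn_triangle {f} _ _ _.
Arguments sn_homog {f} _ _ _.
Arguments sn_sep {f} _ _.
Arguments FL_complete {f} _ _.
Arguments FL_solid_base {f} _ _.

Section Topo.
Context {F : FrechetLattice}.
Implicit Types x y z : F.

Lemma sn_zero k : sn F k vzero = 0.
Proof.
rewrite <- (vscal_0 (@vzero F)), sn_homog, Rabs_R0; ring.
Qed.

Lemma sn_opp k x : sn F k (vopp x) = sn F k x.
Proof. rewrite <- vscal_m1, sn_homog, Rabs_left by lra; ring. Qed.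

Lemma sn_sub_sym k x y : sn F k (vsub x y) = sn F k (vsub y x).
Proof. rewrite <- vsub_opp, sn_opp; auto. Qed.

Lemma sn_sub_tri k a b c : sn F k (vsub a c) <= sn F k (vsub a b) + sn F k (vsub b c).
Proof. rewrite <- (vsub_trans a b c). apply sn_triangle. Qed.

Definition ball (k : nat) (eps : R) (x : F) : Prop := forall i, (i <= k)%nat -> sn F i x < eps.

Lemma ball_nbhd k eps : 0 < eps -> nbhd0 (sn F) (ball k eps).
Proof. intros H; exists k, eps; split; auto. Qed.

Lemma solid_small k eps : 0 < eps -> exists k' eps', 0 < eps' /\
  forall x x', ball k' eps' x -> vle (vabs x') (vabs x) -> ball k eps x'.
Proof.
intros He. destruct (FL_solid_base _ (ball_nbhd k eps He)) as [W [[k' [eps' [He' HW]]] [Hs Hsub]]].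
exists k', eps'; split; auto.
intros x x' Hx Hle. apply Hsub. apply (Hs x x'); auto.
Qed.

Lemma conv_ball u y : conv u y <->
  (forall k eps, 0 < eps -> exists N, forall m, (N <= m)%nat -> ball k eps (vsub (u m) y)).
Proof.
split.
- intros H k eps He. apply H. apply ball_nbhd; auto.
- intros H W [k [eps [He HW]]]. destruct (H k eps He) as [N HN]. exists N; intros m Hm. apply HW, HN; auto.
Qed.

Lemma conv_unique u y y' : conv u y -> conv u y' -> y = y'.
Proof.
intros H1 H2.
assert (E : vsub y y' = vzero).
{ apply sn_sep. intros k. apply Rle_antisym; [|apply sn_nonneg].
  apply Rnot_lt_le. intros Hk. set (e := sn F k (vsub y y')) in *.
  destruct (proj1 (conv_ball _ _) H1 k (e/2) ltac:(lra)) as [N1 HN1].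
  destruct (proj1 (conv_ball _ _) H2 k (e/2) ltac:(lra)) as [N2 HN2].
  specialize (HN1 (N1 + N2)%nat ltac:(lia) k (le_n _)).
  specialize (HN2 (N1 + N2)%nat ltac:(lia) k (le_n _)).
  pose proof (sn_sub_tri k y (u (N1+N2)%nat) y'). rewrite (sn_sub_sym k y (u _)) in H. unfold e in *. lra. }
rewrite <- (vadd_sub y y'), E, vadd_0; auto.
Qed.

Lemma conv_nonneg u y : conv u y -> (exists N, forall m, (N <= m)%nat -> vle vzero (u m)) -> vle vzero y.
Proof.
intros Hc [N0 HN0].
set (w := vsup (vopp y) vzero).
assert (Hw : w = vzero).
{ apply sn_sep. intros k. apply Rle_antisym; [|apply sn_nonneg].
  apply Rnot_lt_le. intros Hk. set (e := sn F k w) in *.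
  destruct (solid_small k e Hk) as [k' [eps' [He' Hs]]].
  destruct (proj1 (conv_ball _ _) Hc k' eps' He') as [N HN].
  assert (Hb : ball k e w).
  { apply (Hs (vsub (u (N + N0)%nat) y)); [apply HN; lia|].
    assert (Hu : vsup (vopp (u (N+N0)%nat)) vzero = vzero).
    { rewrite vsup_comm. apply vsup_absorb. rewrite <- vopp_zero. apply vle_opp. apply HN0; lia. }
    pose proof (vsup_birkhoff (vopp y) (vopp (u (N+N0)%nat)) vzero) as B.
    rewrite Hu, vsub_0 in B. fold w in B.
    replace (vsub (vopp y) (vopp (u (N + N0)%nat))) with (vsub (u (N+N0)%nat) y) in B; auto.
    unfold vsub. rewrite vopp_opp, vadd_comm; auto. }
  specialize (Hb k (le_n _)). unfold e in Hb. lra. }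
apply vle_opp_inv. rewrite vopp_zero. apply vle_trans with w; [apply vsup_ub_l|]. rewrite Hw; apply vle_refl.
Qed.

Lemma conv_sub_const u y c : conv u y -> conv (fun m => vsub (u m) c) (vsub y c).
Proof.
intros H W HW. destruct (H W HW) as [N HN]. exists N. intros m Hm.
replace (vsub (vsub (u m) c) (vsub y c)) with (vsub (u m) y); auto.
unfold vsub. rewrite vopp_add, vopp_opp.
rewrite <- !vadd_assoc. f_equal. rewrite vadd_swap, vadd_opp_l, vadd_0; auto.
Qed.

Lemma conv_le u y c : conv u y -> (exists N, forall m, (N <= m)%nat -> vle (u m) c) -> vle y c.
Proof.
intros H [N HN]. apply vle_0_sub.
apply (conv_nonneg (fun m => vsub c (u m))).
- apply conv_ball. intros k eps He. destruct (proj1 (conv_ball _ _) H k eps He) as [M HM].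
  exists M. intros m Hm i Hi. rewrite vsub_sub_l, sn_sub_sym. apply HM; auto.
- exists N; intros m Hm; apply vle_sub_0; auto.
Qed.

Lemma conv_ge u y c : conv u y -> (exists N, forall m, (N <= m)%nat -> vle c (u m)) -> vle c y.
Proof.
intros H [N HN]. apply vle_0_sub.
apply (conv_nonneg (fun m => vsub (u m) c)).
- apply conv_sub_const; auto.
- exists N; intros m Hm; apply vle_sub_0; auto.
Qed.

End Topo.

(* Automatic continuity: a positive linear map out of a Frechet lattice is
   continuous.  The key is a "majorant" construction: from points z_j that can
   be taken in arbitrarily small balls, completeness produces one positive s
   with |(j+1) z_j| <= s for all j. *)

Section AutoCont.
Context {E : FrechetLattice}.

Fixpoint psum (a : nat -> E) (m : nat) : E :=
  match m with O => vzero | S m' => vadd (psum a m') (a m') end.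

Lemma psum_bound (a : nat -> E) i l : (forall j, (l <= j)%nat -> sn E i (a j) <= (/2)^j) ->
  forall d, sn E i (vsub (psum a (l + d)) (psum a l)) <= 2 * (/2)^l - 2 * (/2)^(l+d).
Proof.
intros Ha d. induction d.
- rewrite Nat.add_0_r, vsub_self, sn_zero. lra.
- replace (l + S d)%nat with (S (l + d)) by lia. simpl psum.
  rewrite vsub_add_l. eapply Rle_trans; [apply sn_triangle|].
  specialize (Ha (l + d)%nat ltac:(lia)).
  replace (2 * (/2)^(S (l+d))) with ((/2)^(l+d)) by (simpl; field). lra.
Qed.

Lemma psum_mono (a : nat -> E) : (forall j, vle vzero (a j)) ->
  forall l d, vle (psum a l) (psum a (l + d)).
Proof.
intros Ha l d. induction d.
- rewrite Nat.add_0_r; apply vle_refl.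
- replace (l + S d)%nat with (S (l + d)) by lia. simpl psum.
  eapply vle_trans; [apply IHd|]. rewrite <- (vadd_0 (psum a (l+d))) at 1. apply vle_add_l; auto.
Qed.

Lemma half_pow_small eps : 0 < eps -> exists N, forall n, (N <= n)%nat -> (/2)^n < eps.
Proof.
intros He. destruct (pow_lt_1_zero (/2) ltac:(rewrite Rabs_pos_eq; lra) eps He) as [N HN].
exists N. intros n Hn. specialize (HN n Hn). rewrite Rabs_pos_eq in HN; auto.
apply pow_le; lra.
Qed.

Lemma psum_cauchy (a : nat -> E) : (forall j i, (i <= j)%nat -> sn E i (a j) <= (/2)^j) ->
  scauchy (sn E) (psum a).
Proof.
intros Ha W [k [eps [He HW]]].
destruct (half_pow_small (eps/2) ltac:(lra)) as [N0 HN0].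
exists (N0 + k)%nat. intros m m' Hm Hm'. apply HW. intros i Hi.
assert (key : forall l d, (N0 + k <= l)%nat -> sn E i (vsub (psum a (l + d)) (psum a l)) < eps).
{ intros l d Hl. eapply Rle_lt_trans; [apply psum_bound|].
  - intros j Hj. apply Ha. lia.
  - specialize (HN0 l ltac:(lia)). assert (0 <= (/2)^(l+d)) by (apply pow_le; lra). lra. }
destruct (Nat.le_ge_cases m' m) as [H|H].
- replace m with (m' + (m - m'))%nat by lia. apply key; lia.
- rewrite sn_sub_sym. replace m' with (m + (m' - m))%nat by lia. apply key; lia.
Qed.

Lemma geometric_majorant (a : nat -> E) : (forall j, vle vzero (a j)) ->
  (forall j i, (i <= j)%nat -> sn E i (a j) <= (/2)^j) ->
  exists s, forall j, vle (a j) s.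
Proof.
intros Ha0 Ha. destruct (FL_complete _ (psum_cauchy a Ha)) as [s Hs].
exists s. intros j. apply (conv_ge (psum a)); auto.
exists (S j). intros m Hm. replace m with (S j + (m - S j))%nat by lia.
eapply vle_trans; [|apply psum_mono; auto]. simpl.
rewrite <- (vadd_0l (a j)) at 1. apply vle_add.
replace (psum a j) with (psum a (0 + j)) by auto. apply (psum_mono a Ha0 0 j).
Qed.

Lemma seq_majorant (P : E -> Prop) :
  (forall k eps, 0 < eps -> exists z, ball k eps z /\ P z) ->
  exists (z : nat -> E) (s : E), (forall j, P (z j)) /\ vle vzero s /\
    forall j, vle (vscal (INR (S j)) (z j)) s /\ vle (vopp (vscal (INR (S j)) (z j))) s.
Proof.
intros HP.
assert (Hsolid : forall j, exists ke : nat * R, 0 < snd ke /\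
   forall x x', ball (fst ke) (snd ke) x -> vle (vabs x') (vabs x) -> @ball E j ((/2)^j) x').
{ intros j. destruct (@solid_small E j ((/2)^j) ltac:(apply pow_lt; lra)) as [k' [e' [He' Hs]]].
  exists (k', e'); simpl; auto. }
apply choice in Hsolid. destruct Hsolid as [ke Hke].
assert (Hpick : forall j, exists z, ball (fst (ke j)) (snd (ke j) / INR (S j)) z /\ P z).
{ intros j. apply HP. apply Rdiv_lt_0_compat; [apply Hke|]. apply lt_0_INR; lia. }
apply choice in Hpick. destruct Hpick as [z Hz].
set (v := fun j => vscal (INR (S j)) (z j)).
assert (Hvb : forall j, ball (fst (ke j)) (snd (ke j)) (v j)).
{ intros j i Hi. unfold v. rewrite sn_homog. destruct (Hz j) as [Hb _].
  specialize (Hb i Hi). assert (Hn : 0 < INR (S j)) by (apply lt_0_INR; lia).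
  set (nj := INR (S j)) in *. set (ej := snd (ke j)) in *.
  rewrite Rabs_pos_eq by lra. apply Rmult_lt_compat_l with (r := nj) in Hb; auto.
  replace (nj * (ej / nj)) with ej in Hb by (field; apply Rgt_not_eq; lra). exact Hb. }
destruct (geometric_majorant (fun j => vabs (v j))) as [s Hs].
- intros j; apply vabs_nonneg.
- intros j i Hi. apply Rlt_le, (proj2 (Hke j) (v j)); auto. rewrite vabs_abs; apply vle_refl.
- exists z, s. split; [intros j; apply Hz|]. split.
  + eapply vle_trans; [apply vabs_nonneg|apply (Hs 0%nat)].
  + intros j; split; eapply vle_trans; try apply (Hs j); [apply vabs_ge|apply vabs_ge_opp].
Qed.

End AutoCont.

Fixpoint sumsn (F : FrechetLattice) (k : nat) (x : F) : R :=
  match k with O => sn F 0 x | S k' => sumsn F k' x + sn F k x end.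

Lemma sumsn_nonneg (F : FrechetLattice) k x : 0 <= sumsn F k x.
Proof.
induction k; simpl; [apply sn_nonneg|]. pose proof (sn_nonneg (S k) x). lra.
Qed.

Lemma sumsn_ge (F : FrechetLattice) k x i : (i <= k)%nat -> sn F i x <= sumsn F k x.
Proof.
induction k; intros Hi.
- assert (i = 0%nat) by lia; subst; simpl; lra.
- simpl. destruct (Nat.eq_dec i (S k)) as [->|Hne].
  + pose proof (sumsn_nonneg F k x). lra.
  + specialize (IHk ltac:(lia)). pose proof (sn_nonneg (S k) x). lra.
Qed.

Lemma sumsn_tri (F : FrechetLattice) k (x y : F) :
  sumsn F k (vadd x y) <= sumsn F k x + sumsn F k y.
Proof.
induction k; simpl; [apply sn_triangle|]. pose proof (sn_triangle (S k) x y). lra.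
Qed.

Lemma sumsn_homog (F : FrechetLattice) k a (x : F) : sumsn F k (vscal a x) = Rabs a * sumsn F k x.
Proof. induction k; simpl; rewrite sn_homog; [ring|rewrite IHk; ring]. Qed.

Lemma ball_shrink (F : FrechetLattice) (y : F) k eps : 0 < eps ->
  exists j, ball k eps (vscal (/ INR (S j)) y).
Proof.
intros He. destruct (INR_unbounded (sumsn F k y / eps)) as [j Hj]. exists j.
intros i Hi. set (n := INR (S j)).
assert (Hn : 0 < n) by (apply lt_0_INR; lia).
rewrite sn_homog, Rabs_pos_eq by (apply Rlt_le, Rinv_0_lt_compat; auto).
pose proof (sumsn_ge F k y i Hi). pose proof (sn_nonneg i y).
assert (Hny : sumsn F k y < eps * n).
{ apply (Rmult_lt_reg_r (/ eps)); [apply Rinv_0_lt_compat; lra|].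
  replace (eps * n * / eps) with n by (field; lra). unfold n; rewrite S_INR; lra. }
apply (Rmult_lt_reg_l n); auto. rewrite <- Rmult_assoc, Rinv_r, Rmult_1_l by lra. lra.
Qed.

Lemma pos_lin_abs_le (E F : VectorLattice) (T : E -> F) : positive_linear T ->
  forall w s, vle w s -> vle (vopp w) s -> vle (vabs (T w)) (T s).
Proof.
intros [Tadd [Tscal Tpos]] w s H1 H2.
assert (Tsub : forall a b, vsub (T a) (T b) = T (vsub a b)).
{ intros a b. unfold vsub. rewrite <- vscal_m1, <- Tscal, <- Tadd, vscal_m1; auto. }
apply vabs_le; apply vle_0_sub.
- rewrite Tsub. apply Tpos, vle_sub_0; auto.
- rewrite <- vscal_m1, <- Tscal, vscal_m1, Tsub. apply Tpos, vle_sub_0; auto.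
Qed.

Lemma pos_lin_cont (E F : FrechetLattice) (T : E -> F) : positive_linear T ->
  forall W, nbhd0 (sn F) W -> nbhd0 (sn E) (fun z => W (T z)).
Proof.
intros HT W HW. apply NNPP. intros Hn.
assert (HP : forall k eps, 0 < eps -> exists z, ball k eps z /\ ~ W (T z)).
{ intros k eps He. apply NNPP; intros Hn2. apply Hn. exists k, eps; split; auto.
  intros x Hx. apply NNPP; intros Hx2. apply Hn2. exists x; split; auto. }
destruct (seq_majorant (fun z => ~ W (T z)) HP) as [z [s [Hz [Hs0 Hzs]]]].
destruct (FL_solid_base _ HW) as [V [[k [eps [He HV]]] [Hsol HVW]]].
destruct (ball_shrink F (T s) k eps He) as [j Hj].
set (n := INR (S j)) in *. assert (Hn0 : 0 < n) by (apply lt_0_INR; lia).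
pose proof HT as [Tadd [Tscal Tpos]].
set (y := vscal (/ n) (T s)).
assert (Hy0 : vle vzero y) by (apply vle_scal; auto; apply Rlt_le, Rinv_0_lt_compat; auto).
apply (Hz j), HVW, (Hsol y); [apply HV, Hj|]. rewrite (vabs_pos y Hy0).
assert (Ez : T (z j) = vscal (/ n) (T (vscal n (z j)))).
{ rewrite Tscal, vscal_assoc, Rinv_l, vscal_1 by lra; auto. }
destruct (Hzs j) as [H1 H2].
pose proof (pos_lin_abs_le E F T HT _ _ H1 H2) as Habs.
rewrite Ez. apply vabs_le.
- apply vle_scal_mono; [apply Rlt_le, Rinv_0_lt_compat; auto|].
  eapply vle_trans; [apply vabs_ge|exact Habs].
- rewrite vopp_scal, <- vscal_opp. apply vle_scal_mono; [apply Rlt_le, Rinv_0_lt_compat; auto|].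
  eapply vle_trans; [apply vabs_ge_opp|exact Habs].
Qed.

Lemma pos_lin_cont_R (E : FrechetLattice) (L : E -> R) :
  (forall x y, L (vadd x y) = L x + L y) -> (forall a x, L (vscal a x) = a * L x) ->
  (forall x, vle vzero x -> 0 <= L x) ->
  forall eps, 0 < eps -> exists k d, 0 < d /\ forall z, ball k d z -> Rabs (L z) < eps.
Proof.
intros Ladd Lscal Lpos eps He.
apply NNPP. intros Hn.
assert (HP : forall k d, 0 < d -> exists z, ball k d z /\ eps <= Rabs (L z)).
{ intros k d Hd. apply NNPP; intros Hn2. apply Hn. exists k, d; split; auto.
  intros x Hx. apply NNPP; intros Hx2. apply Hn2. exists x; split; auto. lra. }
destruct (seq_majorant (fun z => eps <= Rabs (L z)) HP) as [z [s [Hz [Hs0 Hzs]]]].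
destruct (INR_unbounded (L s / eps)) as [j Hj].
specialize (Hz j). destruct (Hzs j) as [H1 H2].
set (n := INR (S j)) in *.
assert (Hn0 : 0 < n) by (apply lt_0_INR; lia).
assert (Hnn : L s / eps < n) by (unfold n; rewrite S_INR; lra).
assert (A1 : n * L (z j) <= L s).
{ assert (0 <= L (vsub s (vscal n (z j)))) by (apply Lpos, vle_sub_0; auto).
  unfold vsub in H. rewrite Ladd, <- vscal_m1, !Lscal in H. lra. }
assert (A2 : - (n * L (z j)) <= L s).
{ assert (0 <= L (vsub s (vopp (vscal n (z j))))) by (apply Lpos, vle_sub_0; auto).
  unfold vsub in H. rewrite Ladd, <- !vscal_m1, !Lscal in H. lra. }
assert (HMe : L s < eps * n).
{ replace (L s) with ((L s / eps) * eps) by (field; apply Rgt_not_eq; lra).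
  rewrite (Rmult_comm eps). apply Rmult_lt_compat_r; auto. }
assert (n * Rabs (L (z j)) <= L s).
{ unfold Rabs; destruct (Rcase_abs (L (z j))); nra. }
nra.
Qed.

Lemma cont_seq (E F : FrechetLattice) (T : E -> F) : positive_linear T ->
  forall u y, conv u y -> conv (fun m => T (u m)) (T y).
Proof.
intros HT u y Hc W HW.
destruct (pos_lin_cont E F T HT W HW) as [k [eps [He HB]]].
destruct (proj1 (conv_ball _ _) Hc k eps He) as [N HN].
exists N. intros m Hm. destruct HT as [Tadd [Tscal _]].
replace (vsub (T (u m)) (T y)) with (T (vsub (u m) y)).
- apply HB. apply HN; auto.
- unfold vsub. rewrite Tadd, <- vscal_m1, Tscal, vscal_m1; auto.
Qed.

Lemma cont_seq_R (E : FrechetLattice) (L : E -> R) :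
  (forall x y, L (vadd x y) = L x + L y) -> (forall a x, L (vscal a x) = a * L x) ->
  (forall x, vle vzero x -> 0 <= L x) ->
  forall u y, conv u y -> forall eps, 0 < eps -> exists N, forall m, (N <= m)%nat -> Rabs (L (u m) - L y) < eps.
Proof.
intros Ladd Lscal Lpos u y Hc eps He.
destruct (pos_lin_cont_R E L Ladd Lscal Lpos eps He) as [k [d [Hd HB]]].
destruct (proj1 (conv_ball _ _) Hc k d Hd) as [N HN].
exists N. intros m Hm.
replace (L (u m) - L y) with (L (vsub (u m) y)).
- apply HB, HN; auto.
- unfold vsub. rewrite Ladd, <- vscal_m1, Lscal. ring.
Qed.

(* The vector space of threads PT X = prod_n X_n, and a reflexive tactic vring
   deciding identities between linear combinations of threads: both sides are
   reified into expressions, whose coefficients on each atom are compared. *)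

Section PTsec.
Context {X : nat -> FrechetLattice}.

Lemma PT_ext (x y : PT X) : (forall n, x n = y n) -> x = y.
Proof. intros H; apply functional_extensionality_dep; auto. Qed.

Definition psubT (x y : PT X) : PT X := paddT x (pscalT (-1) y).

Lemma paddT_comm (x y : PT X) : paddT x y = paddT y x.
Proof. apply PT_ext; intros n; unfold paddT; apply vadd_comm. Qed.

Lemma paddT_assoc (x y z : PT X) : paddT x (paddT y z) = paddT (paddT x y) z.
Proof. apply PT_ext; intros n; unfold paddT; apply vadd_assoc. Qed.

Lemma paddT_0 (x : PT X) : paddT x pzeroT = x.
Proof. apply PT_ext; intros n; unfold paddT, pzeroT; apply vadd_0. Qed.

Lemma paddT_0l (x : PT X) : paddT pzeroT x = x.
Proof. rewrite paddT_comm; apply paddT_0. Qed.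

Lemma pscalT_assoc a b (x : PT X) : pscalT a (pscalT b x) = pscalT (a * b) x.
Proof. apply PT_ext; intros n; unfold pscalT; apply vscal_assoc. Qed.

Lemma pscalT_distr_v a (x y : PT X) : pscalT a (paddT x y) = paddT (pscalT a x) (pscalT a y).
Proof. apply PT_ext; intros n; unfold pscalT, paddT; apply vscal_distr_v. Qed.

Lemma pscalT_distr_s a b (x : PT X) : pscalT (a + b) x = paddT (pscalT a x) (pscalT b x).
Proof. apply PT_ext; intros n; unfold pscalT, paddT; apply vscal_distr_s. Qed.

Lemma pscalT_1 (x : PT X) : pscalT 1 x = x.
Proof. apply PT_ext; intros n; unfold pscalT; apply vscal_1. Qed.

Lemma pscalT_0 (x : PT X) : pscalT 0 x = pzeroT.
Proof. apply PT_ext; intros n; unfold pscalT, pzeroT; apply vscal_0. Qed.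

Lemma pscalT_zero a : pscalT a (@pzeroT X) = pzeroT.
Proof. apply PT_ext; intros n; unfold pscalT, pzeroT; apply vscal_zero. Qed.

Inductive vexp := VAt (n : nat) | VAdd (a b : vexp) | VSc (r : R) (a : vexp) | VZ.

Fixpoint veval (env : list (PT X)) (e : vexp) : PT X :=
  match e with
  | VAt n => nth n env pzeroT
  | VAdd a b => paddT (veval env a) (veval env b)
  | VSc r a => pscalT r (veval env a)
  | VZ => pzeroT
  end.

Fixpoint vcoef (e : vexp) (i : nat) : R :=
  match e with
  | VAt n => if Nat.eqb n i then 1 else 0
  | VAdd a b => vcoef a i + vcoef b i
  | VSc r a => r * vcoef a i
  | VZ => 0
  end.

Fixpoint lcsum (env : list (PT X)) (c : nat -> R) (k : nat) : PT X :=
  match k with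
  | O => pzeroT
  | S k' => paddT (lcsum env c k') (pscalT (c k') (nth k' env pzeroT))
  end.

Lemma lcsum_add env c d k : lcsum env (fun i => c i + d i) k = paddT (lcsum env c k) (lcsum env d k).
Proof.
induction k; simpl.
- rewrite paddT_0; auto.
- rewrite IHk, pscalT_distr_s.
  rewrite <- !paddT_assoc. f_equal. rewrite !paddT_assoc. f_equal. apply paddT_comm.
Qed.

Lemma lcsum_scal env r c k : lcsum env (fun i => r * c i) k = pscalT r (lcsum env c k).
Proof.
induction k; simpl.
- rewrite pscalT_zero; auto.
- rewrite IHk, pscalT_distr_v, pscalT_assoc; auto.
Qed.

Lemma lcsum_zero env k : lcsum env (fun _ => 0) k = pzeroT.
Proof. induction k; simpl; auto. rewrite IHk, pscalT_0, paddT_0; auto. Qed.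

Lemma lcsum_ext env c d k : (forall i, (i < k)%nat -> c i = d i) -> lcsum env c k = lcsum env d k.
Proof.
induction k; intros H; simpl; auto. rewrite IHk by (intros; apply H; lia). rewrite H by lia; auto.
Qed.

Lemma lcsum_atom env n k : lcsum env (fun i => if Nat.eqb n i then 1 else 0) k =
  if Nat.ltb n k then nth n env pzeroT else pzeroT.
Proof.
induction k; simpl; auto.
rewrite IHk. destruct (Nat.eqb n k) eqn:E.
- apply Nat.eqb_eq in E; subst. rewrite Nat.ltb_irrefl. replace (Nat.ltb k (S k)) with true.
  + rewrite pscalT_1, paddT_0l; auto.
  + symmetry; apply Nat.ltb_lt; lia.
- apply Nat.eqb_neq in E. rewrite pscalT_0, paddT_0.
  destruct (Nat.ltb n k) eqn:E1; destruct (Nat.ltb n (S k)) eqn:E2; auto.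
  + apply Nat.ltb_lt in E1; apply Nat.ltb_ge in E2; lia.
  + apply Nat.ltb_ge in E1; apply Nat.ltb_lt in E2; lia.
Qed.

Lemma veval_lc env e : veval env e = lcsum env (vcoef e) (length env).
Proof.
induction e; simpl.
- rewrite lcsum_atom. destruct (Nat.ltb n (length env)) eqn:E; auto.
  apply Nat.ltb_ge in E. apply nth_overflow; auto.
- rewrite IHe1, IHe2, <- lcsum_add; auto.
- rewrite IHe, <- lcsum_scal; auto.
- rewrite lcsum_zero; auto.
Qed.

Fixpoint allbelow (k : nat) (P : nat -> Prop) : Prop :=
  match k with O => True | S k' => allbelow k' P /\ P k' end.

Lemma allbelow_spec k P : allbelow k P -> forall i, (i < k)%nat -> P i.
Proof.
induction k; simpl; intros H i Hi; [lia|]. destruct H as [H1 H2].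
destruct (Nat.eq_dec i k); [subst; auto|apply IHk; auto; lia].
Qed.

Lemma veval_eq env e1 e2 : allbelow (length env) (fun i => vcoef e1 i = vcoef e2 i) ->
  veval env e1 = veval env e2.
Proof.
intros H. rewrite !veval_lc. apply lcsum_ext. apply allbelow_spec; auto.
Qed.

End PTsec.

Ltac inlist x l :=
  lazymatch l with
  | nil => constr:(false)
  | cons x _ => constr:(true)
  | cons _ ?l' => inlist x l'
  end.

Ltac collect t l :=
  lazymatch t with
  | paddT ?a ?b => let l1 := collect a l in collect b l1
  | pscalT _ ?a => collect a l
  | pzeroT => l
  | _ => let b := inlist t l in
         lazymatch b with
         | true => l
         | false => constr:(cons t l)
         end
  end.

Ltac find_idx x l :=
  lazymatch l with
  | cons x _ => constr:(O)
  | cons _ ?l' => let n := find_idx x l' in constr:(S n)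
  end.

Ltac reify t l :=
  lazymatch t with
  | paddT ?a ?b => let e1 := reify a l in let e2 := reify b l in constr:(VAdd e1 e2)
  | pscalT ?r ?a => let e := reify a l in constr:(VSc r e)
  | pzeroT => constr:(VZ)
  | _ => let n := find_idx t l in constr:(VAt n)
  end.

Ltac vring :=
  unfold psubT;
  lazymatch goal with
  | |- @eq (PT ?X) ?lhs ?rhs =>
    let l0 := collect lhs (@nil (PT X)) in
    let l := collect rhs l0 in
    let e1 := reify lhs l in
    let e2 := reify rhs l in
    change (veval l e1 = veval l e2); apply veval_eq; simpl; repeat split
  end.

Section Lim.
Variable X : nat -> FrechetLattice.
Variable p : forall n, X (S n) -> X n.
Hypothesis Hp_pos : forall n, positive_linear (p n).
Hypothesis Hregular : forall n (x y : X (S n)), p n (vsup x y) = vsup (p n x) (p n y).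

Lemma p_add n x y : p n (vadd x y) = vadd (p n x) (p n y).
Proof. apply (Hp_pos n). Qed.
Lemma p_scal n a x : p n (vscal a x) = vscal a (p n x).
Proof. apply (Hp_pos n). Qed.

Lemma inLim_add x y : inLim X p x -> inLim X p y -> inLim X p (paddT x y).
Proof. intros Hx Hy n. unfold paddT. rewrite p_add, <- Hx, <- Hy; auto. Qed.
Lemma inLim_scal a x : inLim X p x -> inLim X p (pscalT a x).
Proof. intros Hx n. unfold pscalT. rewrite p_scal, <- Hx; auto. Qed.
Lemma inLim_combo t x y : inLim X p x -> inLim X p y ->
  inLim X p (paddT (pscalT t x) (pscalT (1 - t) y)).
Proof. intros; apply inLim_add; apply inLim_scal; auto. Qed.

(* Coordinatewise supremum; a thread by regularity of the p_n. *)
Definition psupT (x y : PT X) : PT X := fun n => vsup (x n) (y n).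
Lemma inLim_sup x y : inLim X p x -> inLim X p y -> inLim X p (psupT x y).
Proof. intros Hx Hy n. unfold psupT. rewrite Hregular, <- Hx, <- Hy; auto. Qed.

Lemma inLim_below_eq z w : inLim X p z -> inLim X p w ->
  forall d n, z (n + d)%nat = w (n + d)%nat -> z n = w n.
Proof.
intros Hz Hw d. induction d; intros n H.
- rewrite Nat.add_0_r in H; auto.
- apply IHd. replace (n + S d)%nat with (S (n + d)) in H by lia.
  rewrite Hz, Hw, H; auto.
Qed.

Lemma inLim_eq_le z w n k : inLim X p z -> inLim X p w -> (k <= n)%nat -> z n = w n -> z k = w k.
Proof.
intros Hz Hw Hk H. apply (inLim_below_eq z w Hz Hw (n - k)).
replace (k + (n - k))%nat with n by lia; auto.
Qed.

End Lim.

Lemma ray_lower_bound (a b m : R) : (forall t, 0 <= t -> m <= a + t * b) -> 0 <= b.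
Proof.
intros H. apply Rnot_lt_le. intros Hb.
set (t := (a - m + 1) / (- b)).
assert (Ht : t * b = - (a - m + 1)) by (unfold t; field; lra).
destruct (Rle_dec 0 (a - m + 1)) as [Hp|Hn].
- assert (0 <= t) by (unfold t; apply Rmult_le_pos; [lra|apply Rlt_le, Rinv_0_lt_compat; lra]).
  specialize (H t ltac:(lra)). lra.
- specialize (H 0 (Rle_refl 0)). lra.
Qed.

(* A positive affine function q1 on a vector lattice: q1 - q1(0) is a positive
   linear form, hence q1 is monotone. *)

Section Q1.
Variable E : VectorLattice.
Variable q1 : E -> R.
Hypothesis Hq1_aff : forall t (y1 y2 : E),
      q1 (vadd (vscal t y1) (vscal (1 - t) y2)) = t * q1 y1 + (1 - t) * q1 y2.
Hypothesis Hq1_pos : forall y : E, vle vzero y -> 0 <= q1 y.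

Lemma q1_scal t y : q1 (vscal t y) = t * q1 y + (1 - t) * q1 vzero.
Proof. rewrite <- Hq1_aff, vscal_zero, vadd_0; auto. Qed.

Lemma q1_add a b : q1 (vadd a b) = q1 a + q1 b - q1 vzero.
Proof.
assert (E1 : vadd a b = vadd (vscal (/2) (vscal 2 a)) (vscal (1 - /2) (vscal 2 b))).
{ rewrite !vscal_assoc. replace (/2 * 2) with 1 by field. replace ((1 - /2) * 2) with 1 by field.
  rewrite !vscal_1; auto. }
rewrite E1, Hq1_aff, !q1_scal. field.
Qed.

Definition L0 (y : E) := q1 y - q1 vzero.

Lemma L0_add a b : L0 (vadd a b) = L0 a + L0 b.
Proof. unfold L0; rewrite q1_add; ring. Qed.
Lemma L0_scal t a : L0 (vscal t a) = t * L0 a.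
Proof. unfold L0; rewrite q1_scal; ring. Qed.
Lemma L0_pos a : vle vzero a -> 0 <= L0 a.
Proof.
intros Ha. apply (ray_lower_bound (q1 vzero) _ 0). intros t Ht.
pose proof (Hq1_pos (vscal t a) (vle_scal _ _ Ht Ha)) as H.
rewrite q1_scal in H. unfold L0. lra.
Qed.
Lemma q1_mono a b : vle a b -> q1 a <= q1 b.
Proof.
intros H. pose proof (L0_pos (vsub b a) (vle_sub_0 _ _ H)).
unfold vsub in H0. rewrite L0_add, <- vscal_m1, L0_scal in H0. unfold L0 in H0. lra.
Qed.
End Q1.

Section Spf.
Variable X : nat -> FrechetLattice.
Variable q1 : X 0%nat -> R.
Hypothesis Hq1_aff : forall t (y1 y2 : X 0%nat),
      q1 (vadd (vscal t y1) (vscal (1 - t) y2)) = t * q1 y1 + (1 - t) * q1 y2.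
Hypothesis Hq1_pos : forall y : X 0%nat, vle vzero y -> 0 <= q1 y.
Variable H : PT X -> Prop.
Hypothesis HH_convex : forall t h1 h2, 0 <= t <= 1 -> H h1 -> H h2 ->
      H (paddT (pscalT t h1) (pscalT (1 - t) h2)).

Let q := fun z : PT X => q1 (z 0%nat).

Lemma spf_ge h x : H h -> pleT h x -> Rbar_le (Finite (q h)) (spf H q x).
Proof. intros Hh Hle. apply Rbar_sup_ub. exists h; auto. Qed.

Lemma spf_le_q x : Rbar_le (spf H q x) (Finite (q x)).
Proof.
apply Rbar_sup_lub. intros e [h [Hh [Hle ->]]]. simpl. unfold q.
apply (q1_mono _ q1 Hq1_aff Hq1_pos). apply Hle.
Qed.

Lemma spf_not_pinf x : spf H q x <> p_infty.
Proof. intros E. pose proof (spf_le_q x). rewrite E in H0. simpl in H0. auto. Qed.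

Lemma spf_approx a x : Rbar_lt (Finite a) (spf H q x) -> exists h, H h /\ pleT h x /\ a < q h.
Proof.
intros Ha. destruct (Rbar_sup_approx _ _ Ha) as [e [[h [Hh [Hle ->]]] He]].
exists h; split; auto; split; auto. apply Rbar_lt_fin; auto.
Qed.

Lemma pleT_combo t (h1 h2 x y : PT X) : 0 <= t <= 1 -> pleT h1 x -> pleT h2 y ->
  pleT (paddT (pscalT t h1) (pscalT (1 - t) h2)) (paddT (pscalT t x) (pscalT (1 - t) y)).
Proof.
intros Ht H1 H2 n. unfold paddT, pscalT. apply vle_add2; apply vle_scal_mono; auto; lra.
Qed.

(* Concavity, in a form avoiding the values of spf. *)
Lemma spf_conc t a b x y : 0 <= t <= 1 ->
  Rbar_lt (Finite a) (spf H q x) -> Rbar_lt (Finite b) (spf H q y) ->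
  Rbar_le (Finite (t * a + (1 - t) * b)) (spf H q (paddT (pscalT t x) (pscalT (1 - t) y))).
Proof.
intros Ht Ha Hb.
destruct (spf_approx a x Ha) as [h1 [Hh1 [Hl1 Hq1']]].
destruct (spf_approx b y Hb) as [h2 [Hh2 [Hl2 Hq2']]].
eapply Rbar_le_trans; [|apply (spf_ge (paddT (pscalT t h1) (pscalT (1 - t) h2)))].
- simpl. unfold q, paddT, pscalT. rewrite Hq1_aff. unfold q in *. nra.
- apply HH_convex; auto.
- apply pleT_combo; auto.
Qed.

Lemma spf_concave_Rbar (D : PT X -> Prop) : concave_Rbar_on D (spf H q).
Proof.
split.
- intros x _; apply spf_not_pinf.
- intros x y t rx ry _ _ Ht Ex Ey.
  apply Rbar_le_eps. intros eps He.
  replace (t * rx + (1 - t) * ry - eps) with (t * (rx - eps) + (1 - t) * (ry - eps)) by ring.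
  apply spf_conc; [lra| |]; [rewrite Ex|rewrite Ey]; apply Rbar_lt_fin; lra.
Qed.

End Spf.

(* Maximal dominated partial linear forms
   exist by Zorn's lemma (for chains the union is an upper bound), and a
   maximal one is defined everywhere since it extends by one dimension. *)

Lemma zorn_prop (T : Type) (t0 : T) (R : T -> T -> Prop) :
  (forall t, R t t) -> (forall r s t, R r s -> R s t -> R r t) ->
  (forall A : T -> Prop, (forall s t, A s -> A t -> R s t \/ R t s) -> exists t, forall s, A s -> R s t) ->
  exists t, forall s, R t s -> R s t.
Proof.
intros Hr Ht Hc.
destruct (@classical_sets.ZL_preorder T t0 (fun a b => boolp.asbool (R a b))) as [t Ht0].
- intros t. apply boolp.asboolT. auto.
- intros r s t H1 H2. apply boolp.asboolT. apply boolp.asboolW in H1. apply boolp.asboolW in H2. eauto.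
- intros A HA. destruct (Hc A) as [t Ht1].
  + intros s t Hs Htt. destruct (HA s t Hs Htt) as [H|H]; [left|right]; apply boolp.asboolW; exact H.
  + exists t. intros s Hs. apply boolp.asboolT. auto.
- exists t. intros s Hs. apply boolp.asboolW. apply Ht0. apply boolp.asboolT. exact Hs.
Qed.

Section HB.
Variable X : nat -> FrechetLattice.
Variable V : PT X -> Prop.
Hypothesis HV0 : V pzeroT.
Hypothesis HVadd : forall x y, V x -> V y -> V (paddT x y).
Hypothesis HVscal : forall a x, V x -> V (pscalT a x).
Variable P : PT X -> R.
Hypothesis HPconv : forall t v1 v2, 0 <= t <= 1 -> V v1 -> V v2 ->
  P (paddT (pscalT t v1) (pscalT (1 - t) v2)) <= t * P v1 + (1 - t) * P v2.
Hypothesis HP0 : 0 <= P pzeroT.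

Record partial_minorant := {
  pfD : PT X -> Prop;
  pfl : PT X -> R;
  pf_sub : forall v, pfD v -> V v;
  pf_0 : pfD pzeroT;
  pf_add : forall x y, pfD x -> pfD y -> pfD (paddT x y);
  pf_scal : forall a x, pfD x -> pfD (pscalT a x);
  pf_ladd : forall x y, pfD x -> pfD y -> pfl (paddT x y) = pfl x + pfl y;
  pf_lscal : forall a x, pfD x -> pfl (pscalT a x) = a * pfl x;
  pf_le : forall v, pfD v -> pfl v <= P v
}.

Definition pf_extends (a b : partial_minorant) : Prop :=
  (forall v, pfD a v -> pfD b v) /\ (forall v, pfD a v -> pfl b v = pfl a v).

Definition pf_trivial : partial_minorant.
Proof.
refine (Build_partial_minorant (fun v => v = pzeroT) (fun _ => 0) _ _ _ _ _ _ _).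
- intros v ->; auto.
- auto.
- intros x y -> ->; apply paddT_0.
- intros a x ->; apply pscalT_zero.
- intros; ring.
- intros; ring.
- intros v ->; auto.
Defined.

Section Chain.
Variable A : partial_minorant -> Prop.
Hypothesis Atot : forall s t, A s -> A t -> pf_extends s t \/ pf_extends t s.
Hypothesis Ane : exists a, A a.

Definition chD (v : PT X) : Prop := exists a, A a /\ pfD a v.
Definition chl (v : PT X) : R :=
  match excluded_middle_informative (chD v) with
  | left Hex => pfl (proj1_sig (constructive_indefinite_description _ Hex)) v
  | right _ => 0
  end.

Lemma chl_eq a v : A a -> pfD a v -> chl v = pfl a v.
Proof.
intros Ha Hv. unfold chl. destruct (excluded_middle_informative (chD v)) as [Hex|Hn].
- destruct (constructive_indefinite_description _ Hex) as [b [Hb Hbv]]. simpl.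
  destruct (Atot a b Ha Hb) as [[_ E]|[_ E]]; auto. symmetry; auto.
- exfalso; apply Hn; exists a; auto.
Qed.

Lemma ch_two v1 v2 : chD v1 -> chD v2 -> exists a, A a /\ pfD a v1 /\ pfD a v2.
Proof.
intros [a1 [Ha1 H1]] [a2 [Ha2 H2]]. destruct (Atot a1 a2 Ha1 Ha2) as [[E _]|[E _]].
- exists a2; auto.
- exists a1; auto.
Qed.

Definition pf_chain_ub : partial_minorant.
Proof.
refine (Build_partial_minorant chD chl _ _ _ _ _ _ _).
- intros v [a [_ Hv]]. eapply pf_sub; eauto.
- destruct Ane as [a Ha]. exists a; split; auto; apply pf_0.
- intros x y Hx Hy. destruct (ch_two x y Hx Hy) as [a [Ha [H1 H2]]]. exists a; split; auto; apply pf_add; auto.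
- intros c x [a [Ha Hx]]. exists a; split; auto; apply pf_scal; auto.
- intros x y Hx Hy. destruct (ch_two x y Hx Hy) as [a [Ha [H1 H2]]].
  rewrite !(chl_eq a); auto; [apply pf_ladd; auto|apply pf_add; auto].
- intros c x [a [Ha Hx]]. rewrite !(chl_eq a); auto; [apply pf_lscal; auto|apply pf_scal; auto].
- intros v [a [Ha Hv]]. rewrite (chl_eq a); auto. apply pf_le; auto.
Defined.

Lemma pf_chain_ub_spec : forall a, A a -> pf_extends a pf_chain_ub.
Proof.
intros a Ha. split.
- intros v Hv. exists a; auto.
- intros v Hv. simpl. apply chl_eq; auto.
Qed.
End Chain.

Section Ext.
Variable M : partial_minorant.
Variable v : PT X.
Hypothesis Hv : V v.
Hypothesis HvM : ~ pfD M v.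

Let l := pfl M.

(* Convexity of P links the admissible slopes below and above v. *)
Lemma slope_ineq w1 w2 s t : pfD M w1 -> pfD M w2 -> 0 < s -> 0 < t ->
  t * l w1 + s * l w2 <= t * P (paddT w1 (pscalT (- s) v)) + s * P (paddT w2 (pscalT t v)).
Proof.
intros H1 H2 Hs Ht.
set (al := t / (s + t)).
assert (Hal : 0 <= al <= 1).
{ unfold al; split; [apply Rlt_le, Rdiv_lt_0_compat; lra|].
  apply Rmult_le_reg_r with (s + t); [lra|]. unfold Rdiv. rewrite Rmult_assoc, Rinv_l by (apply Rgt_not_eq; lra). lra. }
set (u := paddT (pscalT al w1) (pscalT (1 - al) w2)).
assert (Hu : pfD M u) by (apply pf_add; apply pf_scal; auto).
assert (Hlu : l u = al * l w1 + (1 - al) * l w2).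
{ unfold u, l. rewrite pf_ladd, !pf_lscal; auto; apply pf_scal; auto. }
assert (Eu : u = paddT (pscalT al (paddT w1 (pscalT (- s) v))) (pscalT (1 - al) (paddT w2 (pscalT t v)))).
{ unfold u. vring; unfold al; try field; try (apply Rgt_not_eq; lra). }
assert (HPu : P u <= al * P (paddT w1 (pscalT (- s) v)) + (1 - al) * P (paddT w2 (pscalT t v))).
{ rewrite Eu. apply HPconv; auto; apply HVadd; auto; try (eapply pf_sub; eauto). }
pose proof (pf_le M u Hu). fold l in H.
assert (E1 : (s + t) * al = t) by (unfold al; field; apply Rgt_not_eq; lra).
assert (E2 : (s + t) * (1 - al) = s) by (unfold al; field; apply Rgt_not_eq; lra).
assert (Hst : 0 < s + t) by lra.
assert (HH : (s + t) * (al * l w1 + (1 - al) * l w2) <= (s + t) * (al * P (paddT w1 (pscalT (- s) v)) + (1 - al) * P (paddT w2 (pscalT t v)))).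
{ apply Rmult_le_compat_l; lra. }
rewrite !Rmult_plus_distr_l, <- !Rmult_assoc, E1, E2 in HH. lra.
Qed.

(* Slopes that the value at v must exceed; they are bounded by those it must
   stay below, so a slope c fits in between. *)
Definition lower_slopes (r : R) : Prop := exists w s, pfD M w /\ 0 < s /\ r = (l w - P (paddT w (pscalT (- s) v))) / s.

Lemma lower_slopes_bound r w2 t : lower_slopes r -> pfD M w2 -> 0 < t -> r <= (P (paddT w2 (pscalT t v)) - l w2) / t.
Proof.
intros [w [s [Hw [Hs ->]]]] Hw2 Ht.
pose proof (slope_ineq w w2 s t Hw Hw2 Hs Ht).
apply Rmult_le_reg_r with (s * t); [nra|].
replace ((l w - P (paddT w (pscalT (- s) v))) / s * (s * t)) with (t * (l w - P (paddT w (pscalT (- s) v)))) by (field; apply Rgt_not_eq; lra).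
replace ((P (paddT w2 (pscalT t v)) - l w2) / t * (s * t)) with (s * (P (paddT w2 (pscalT t v)) - l w2)) by (field; apply Rgt_not_eq; lra).
lra.
Qed.

Lemma exists_slope : exists c, (forall r, lower_slopes r -> r <= c) /\
  (forall w2 t, pfD M w2 -> 0 < t -> c <= (P (paddT w2 (pscalT t v)) - l w2) / t).
Proof.
destruct (completeness lower_slopes) as [c [Hc1 Hc2]].
- exists ((P (paddT pzeroT (pscalT 1 v)) - l pzeroT) / 1). intros r Hr. apply (lower_slopes_bound r pzeroT 1); auto; [apply pf_0|lra].
- exists ((l pzeroT - P (paddT pzeroT (pscalT (- 1) v))) / 1). exists pzeroT, 1; split; [apply pf_0|split; auto; lra].
- exists c; split; auto. intros w2 t Hw2 Ht. apply Hc2. intros r Hr. apply lower_slopes_bound; auto.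
Qed.

Lemma repr_unique w w' t t' : pfD M w -> pfD M w' ->
  paddT w (pscalT t v) = paddT w' (pscalT t' v) -> w = w' /\ t = t'.
Proof.
intros Hw Hw' E.
assert (Ew : w = paddT w' (pscalT (t' - t) v)).
{ transitivity (paddT (paddT w (pscalT t v)) (pscalT (- t) v)); [vring; ring|].
  rewrite E. vring; ring. }
destruct (Req_dec t t') as [<-|Hne].
- split; auto. rewrite Ew. vring; ring.
- exfalso. apply HvM.
  assert (Ev : v = pscalT (/ (t' - t)) (paddT w (pscalT (-1) w'))).
  { rewrite Ew. vring; try field; try ring; intro Hc; apply Hne; lra. }
  rewrite Ev. apply pf_scal, pf_add; auto. apply pf_scal; auto.
Qed.

Section WithC.
Variable c : R.
Hypothesis Hc1 : forall r, lower_slopes r -> r <= c.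
Hypothesis Hc2 : forall w2 t, pfD M w2 -> 0 < t -> c <= (P (paddT w2 (pscalT t v)) - l w2) / t.

Definition extD (y : PT X) : Prop := exists w t, pfD M w /\ y = paddT w (pscalT t v).
Definition extl (y : PT X) : R :=
  match excluded_middle_informative (exists wt : PT X * R, pfD M (fst wt) /\ y = paddT (fst wt) (pscalT (snd wt) v)) with
  | left Hex => let wt := proj1_sig (constructive_indefinite_description _ Hex) in l (fst wt) + snd wt * c
  | right _ => 0
  end.

Lemma extl_eq w t : pfD M w -> extl (paddT w (pscalT t v)) = l w + t * c.
Proof.
intros Hw. unfold extl.
destruct (excluded_middle_informative _) as [Hex|Hn].
- destruct (constructive_indefinite_description _ Hex) as [[w' t'] [Hw' E]]. simpl in *.
  destruct (repr_unique w' w t' t Hw' Hw (eq_sym E)) as [-> ->]; auto.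
- exfalso; apply Hn; exists (w, t); auto.
Qed.

Lemma ext_dominated w t : pfD M w -> l w + t * c <= P (paddT w (pscalT t v)).
Proof.
intros Hw. destruct (Rtotal_order t 0) as [Ht|[Ht|Ht]].
- assert (Hr : lower_slopes ((l w - P (paddT w (pscalT (- - t) v))) / (- t))).
  { exists w, (- t); split; auto; split; auto; lra. }
  apply Hc1 in Hr. replace (- - t) with t in Hr by ring.
  apply Rmult_le_compat_l with (r := - t) in Hr; [|lra].
  replace (- t * ((l w - P (paddT w (pscalT t v))) / - t)) with (l w - P (paddT w (pscalT t v))) in Hr
    by (field; apply Rlt_not_eq; lra). lra.
- subst. replace (paddT w (pscalT 0 v)) with w by (vring; ring).
  rewrite Rmult_0_l, Rplus_0_r. apply pf_le; auto.
- pose proof (Hc2 w t Hw Ht) as Hr.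
  apply Rmult_le_compat_l with (r := t) in Hr; [|lra].
  replace (t * ((P (paddT w (pscalT t v)) - l w) / t)) with (P (paddT w (pscalT t v)) - l w) in Hr
    by (field; apply Rgt_not_eq; lra). lra.
Qed.

Definition pf_ext : partial_minorant.
Proof.
refine (Build_partial_minorant extD extl _ _ _ _ _ _ _).
- intros y Hy. destruct Hy as [w [t [Hw Hy]]]. subst y. apply HVadd; [eapply pf_sub; eauto|apply HVscal; auto].
- exists pzeroT, 0; split; [apply pf_0|]. vring; ring.
- intros x y Hx Hy. destruct Hx as [w1 [t1 [H1 Ex]]]. destruct Hy as [w2 [t2 [H2 Ey]]]. subst x y. exists (paddT w1 w2), (t1 + t2); split; [apply pf_add; auto|]. vring; ring.
- intros a x Hx. destruct Hx as [w [t [Hw Ex]]]. subst x. exists (pscalT a w), (a * t); split; [apply pf_scal; auto|]. vring; ring.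
- intros x y Hx Hy. destruct Hx as [w1 [t1 [H1 Ex]]]. destruct Hy as [w2 [t2 [H2 Ey]]]. subst x y.
  replace (paddT (paddT w1 (pscalT t1 v)) (paddT w2 (pscalT t2 v))) with (paddT (paddT w1 w2) (pscalT (t1 + t2) v)) by (vring; ring).
  rewrite !extl_eq; auto; [|apply pf_add; auto]. unfold l; rewrite pf_ladd; auto. ring.
- intros a x Hx. destruct Hx as [w [t [Hw Ex]]]. subst x.
  replace (pscalT a (paddT w (pscalT t v))) with (paddT (pscalT a w) (pscalT (a * t) v)) by (vring; ring).
  rewrite !extl_eq; auto; [|apply pf_scal; auto]. unfold l; rewrite pf_lscal; auto. ring.
- intros y [w [t [Hw ->]]]. rewrite extl_eq; auto. apply ext_dominated; auto.
Defined.

Lemma pf_ext_extends : pf_extends M pf_ext /\ pfD pf_ext v.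
Proof.
split; [split|].
- intros y Hy. exists y, 0; split; auto. vring; ring.
- intros y Hy. simpl. replace y with (paddT y (pscalT 0 v)) at 1 by (vring; ring). rewrite extl_eq; auto. unfold l; ring.
- exists pzeroT, 1; split; [apply pf_0|]. vring; ring.
Qed.
End WithC.
End Ext.

Lemma HB_convex : exists lam : PT X -> R,
  (forall v1 v2, V v1 -> V v2 -> lam (paddT v1 v2) = lam v1 + lam v2) /\
  (forall a x, V x -> lam (pscalT a x) = a * lam x) /\
  (forall x, V x -> lam x <= P x).
Proof.
destruct (zorn_prop partial_minorant pf_trivial pf_extends) as [M HM].
- intros t; split; auto.
- intros r s t [H1 H2] [H3 H4]; split; auto. intros v Hv. rewrite H4; auto.
- intros A Atot. destruct (classic (exists a, A a)) as [Ane|Hemp].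
  + exists (pf_chain_ub A Atot Ane). apply pf_chain_ub_spec.
  + exists pf_trivial. intros s Hs; exfalso; apply Hemp; eauto.
- assert (Hall : forall v, V v -> pfD M v).
  { intros v Hv. apply NNPP; intros HvM.
    destruct (exists_slope M v Hv) as [c [Hc1 Hc2]].
    destruct (pf_ext_extends M v Hv HvM c Hc1 Hc2) as [Hle Hin].
    destruct (HM _ Hle) as [Hsub _]. apply HvM, Hsub, Hin. }
  exists (pfl M); split; [|split].
  + intros; apply pf_ladd; auto.
  + intros; apply pf_lscal; auto.
  + intros; apply pf_le; auto.
Qed.
End HB.



(* A real concave function phi on a subspace V has, at every point x, an affine
   majorant touching it at x: Hahn-Banach for the convex P(v) = phi x - phi (x + v). *)
Lemma affine_support (X : nat -> FrechetLattice) (V : PT X -> Prop)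
  (HV0 : V pzeroT) (HVadd : forall x y, V x -> V y -> V (paddT x y))
  (HVscal : forall a x, V x -> V (pscalT a x)) (phi : PT X -> R)
  (Hconc : forall t v1 v2, 0 <= t <= 1 -> V v1 -> V v2 ->
     t * phi v1 + (1 - t) * phi v2 <= phi (paddT (pscalT t v1) (pscalT (1 - t) v2)))
  (x : PT X) (Hx : V x) :
  exists a : PT X -> R,
    (forall t x1 x2, V x1 -> V x2 -> a (paddT (pscalT t x1) (pscalT (1 - t) x2)) = t * a x1 + (1 - t) * a x2) /\
    (forall w, V w -> phi w <= a w) /\ a x = phi x.
Proof.
set (P := fun v => phi x - phi (paddT x v)).
destruct (HB_convex X V HV0 HVadd HVscal P) as [lam [Ladd [Lscal Lle]]].
- intros t v1 v2 Ht H1 H2. unfold P.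
  replace (paddT x (paddT (pscalT t v1) (pscalT (1 - t) v2)))
    with (paddT (pscalT t (paddT x v1)) (pscalT (1 - t) (paddT x v2))) by (vring; ring).
  pose proof (Hconc t (paddT x v1) (paddT x v2) Ht (HVadd _ _ Hx H1) (HVadd _ _ Hx H2)). nra.
- unfold P. rewrite paddT_0. lra.
- assert (L0 : lam pzeroT = 0).
  { rewrite <- (pscalT_0 pzeroT), Lscal; auto; ring. }
  exists (fun y => phi x - lam (psubT y x)). split; [|split].
  + intros t x1 x2 H1 H2.
    replace (psubT (paddT (pscalT t x1) (pscalT (1 - t) x2)) x)
      with (paddT (pscalT t (psubT x1 x)) (pscalT (1 - t) (psubT x2 x))) by (vring; ring).
    rewrite Ladd, !Lscal; try ring; unfold psubT; auto.
  + intros w Hw. assert (Hs : V (psubT w x)) by (apply HVadd; auto).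
    pose proof (Lle _ Hs). unfold P in H.
    replace (paddT x (psubT w x)) with w in H by (vring; ring). lra.
  + replace (psubT x x) with (@pzeroT X) by (vring; ring). rewrite L0. ring.
Qed.

Definition concave_ext_on {X : nat -> FrechetLattice} (D : PT X -> Prop)
  (f : PT X -> Rbar) : Prop :=
  forall t a b w1 w2, 0 <= t <= 1 -> D w1 -> D w2 ->
    Rbar_le (Finite a) (f w1) -> Rbar_le (Finite b) (f w2) ->
    Rbar_le (Finite (t * a + (1 - t) * b)) (f (paddT (pscalT t w1) (pscalT (1 - t) w2))).

Definition realpart (e : Rbar) : R := match e with Finite r => r | _ => 0 end.

Lemma realpart_concave {X : nat -> FrechetLattice} (D : PT X -> Prop) (g : PT X -> Rbar) :
  concave_ext_on D g -> (forall w, D w -> g w = Finite (realpart (g w))) ->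
  (forall t v1 v2, D v1 -> D v2 -> D (paddT (pscalT t v1) (pscalT (1 - t) v2))) ->
  forall t v1 v2, 0 <= t <= 1 -> D v1 -> D v2 ->
    t * realpart (g v1) + (1 - t) * realpart (g v2) <=
    realpart (g (paddT (pscalT t v1) (pscalT (1 - t) v2))).
Proof.
intros Hc Hfin HD t v1 v2 Ht H1 H2.
assert (Hle : forall w, D w -> Rbar_le (Finite (realpart (g w))) (g w)).
{ intros w Hw. rewrite (Hfin w Hw) at 2. apply Rbar_le_refl. }
pose proof (Hc t _ _ v1 v2 Ht H1 H2 (Hle v1 H1) (Hle v2 H2)) as Hcomb.
rewrite (Hfin _ (HD t v1 v2 H1 H2)) in Hcomb. exact Hcomb.
Qed.

Section Penalty.
Variable X : nat -> FrechetLattice.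
Variables L N : PT X -> R.
Variable M : R.
Hypothesis L_add : forall a b, L (paddT a b) = L a + L b.
Hypothesis L_scal : forall t a, L (pscalT t a) = t * L a.
Hypothesis N_add : forall a b, N (paddT a b) <= N a + N b.
Hypothesis N_scal : forall t a, N (pscalT t a) = Rabs t * N a.
Hypothesis HM : 0 <= M.

Definition penalty (y : PT X) : R := Rmax 0 (- L y + M * N y).

Lemma penalty_nonneg y : 0 <= penalty y.
Proof. apply Rmax_l. Qed.

Lemma penalty_ge y : - L y + M * N y <= penalty y.
Proof. apply Rmax_r. Qed.

Lemma penalty_zero : penalty pzeroT = 0.
Proof.
unfold penalty. rewrite <- (pscalT_0 (@pzeroT X)), L_scal, N_scal, Rabs_R0.
replace (- (0 * L pzeroT) + M * (0 * N pzeroT)) with 0 by ring. apply Rmax_left; lra.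
Qed.

Lemma penalty_convex t y1 y2 : 0 <= t <= 1 ->
  penalty (paddT (pscalT t y1) (pscalT (1 - t) y2)) <= t * penalty y1 + (1 - t) * penalty y2.
Proof.
intros Ht. unfold penalty at 1. apply Rmax_lub.
- pose proof (penalty_nonneg y1); pose proof (penalty_nonneg y2); nra.
- rewrite L_add, !L_scal.
  pose proof (N_add (pscalT t y1) (pscalT (1 - t) y2)) as HN. rewrite !N_scal in HN.
  rewrite (Rabs_pos_eq t), (Rabs_pos_eq (1 - t)) in HN by lra.
  pose proof (penalty_ge y1); pose proof (penalty_ge y2).
  assert (M * N (paddT (pscalT t y1) (pscalT (1 - t) y2)) <= M * (t * N y1 + (1 - t) * N y2))
    by (apply Rmult_le_compat_l; auto).
  nra.
Qed.

End Penalty.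

Lemma strict_ge (phi : nat -> nat) : (forall i, (phi i < phi (S i))%nat) -> forall j, (j <= phi j)%nat.
Proof. intros H j; induction j; [lia|]. specialize (H j); lia. Qed.

Lemma strict_mono (phi : nat -> nat) : (forall i, (phi i < phi (S i))%nat) ->
  forall i j, (i <= j)%nat -> (phi i <= phi j)%nat.
Proof. intros H i j Hij. induction Hij; auto. specialize (H m); lia. Qed.

(* The setting of the theorem. *)

Section Duality.
Variable X : nat -> FrechetLattice.
Variable p : forall n, X (S n) -> X n.
Hypothesis Hp_pos : forall n, positive_linear (p n).
Hypothesis Hregular : forall n (x y : X (S n)), p n (vsup x y) = vsup (p n x) (p n y).
Variable X0 : PT X -> Prop.
Hypothesis HX0_sub : forall x, X0 x -> inLim X p x.
Hypothesis HX0_zero : X0 pzeroT.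
Hypothesis HX0_add : forall x y, X0 x -> X0 y -> X0 (paddT x y).
Hypothesis HX0_scal : forall a x, X0 x -> X0 (pscalT a x).
Variable q1 : X 0%nat -> R.
Hypothesis Hq1_aff : forall t (y1 y2 : X 0%nat),
      q1 (vadd (vscal t y1) (vscal (1 - t) y2)) = t * q1 y1 + (1 - t) * q1 y2.
Hypothesis Hq1_pos : forall y : X 0%nat, vle vzero y -> 0 <= q1 y.
Variable H : PT X -> Prop.
Hypothesis HH_sub : forall h, H h -> inLim X p h.
Hypothesis HH_convex : forall t h1 h2, 0 <= t <= 1 -> H h1 -> H h2 ->
      H (paddT (pscalT t h1) (pscalT (1 - t) h2)).
Hypothesis HH_seqclosed : forall (u : nat -> PT X) x,
      (forall m, H (u m)) -> inLim X p x -> convT u x -> H x.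
Hypothesis Hi_ii : forall n,
      (forall y : X n, (exists x, X0 x /\ x n = y) ->
         exists h, H h /\ vle (h n) y)
      \/
      usc_on (fun y : X n => exists x, X0 x /\ x n = y)
        (fun y : X n => Rbar_sup (fun e => exists x, inLim X p x /\ x n = y /\
                                     e = spf H (fun z => q1 (z 0%nat)) x)).
Hypothesis Hiii : forall B : PT X -> Prop,
      (forall b, B b -> H b) ->
      (exists f : nat -> PT X, forall b, B b -> exists k, f k = b) ->
      (exists u, inLim X p u /\ forall b, B b -> pleT b u) ->
      (exists m : R, forall b, B b -> m <= q1 (b 0%nat)) ->
      exists nq, forall n, (nq <= n)%nat ->
        seq_precompact (fun y : X n => exists b, B b /\ b n = y).

Let q := fun z : PT X => q1 (z 0%nat).

Lemma X0_combo t x y : X0 x -> X0 y -> X0 (paddT (pscalT t x) (pscalT (1 - t) y)).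
Proof. intros; apply HX0_add; apply HX0_scal; auto. Qed.

Definition supproj (n : nat) (y : X n) : Rbar :=
  Rbar_sup (fun e => exists x, inLim X p x /\ x n = y /\ e = spf H (fun z => q1 (z 0%nat)) x).

Lemma supproj_ge_spf n x : inLim X p x -> Rbar_le (spf H q x) (supproj n (x n)).
Proof. intros Hx. apply Rbar_sup_ub. exists x; auto. Qed.

(* f_n o pr_n is still dominated by q, as threads agreeing at level n agree at
   level 0. *)
Lemma supproj_le_q n w : inLim X p w -> Rbar_le (supproj n (w n)) (Finite (q w)).
Proof.
intros Hw. apply Rbar_sup_lub. intros e [z [Hz [Ezn ->]]].
eapply Rbar_le_trans; [apply (spf_le_q X q1 Hq1_aff Hq1_pos H)|]. simpl. unfold q.
rewrite (inLim_eq_le X p z w n 0 Hz Hw ltac:(lia) Ezn). lra.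
Qed.

Lemma supproj_not_pinf n w : inLim X p w -> supproj n (w n) <> p_infty.
Proof. intros Hw E. pose proof (supproj_le_q n w Hw) as Hq. rewrite E in Hq; simpl in Hq; auto. Qed.

Lemma supproj_finite n w a : inLim X p w -> Rbar_le (Finite a) (supproj n (w n)) ->
  supproj n (w n) = Finite (realpart (supproj n (w n))).
Proof.
intros Hw Ha. pose proof (supproj_le_q n w Hw). destruct (supproj n (w n)); simpl in *; auto; tauto.
Qed.

(* f_n o pr_n is concave, because spf is and the limit is a vector space. *)
Lemma supproj_concave n : concave_ext_on (inLim X p) (fun w => supproj n (w n)).
Proof.
intros t a b w1 w2 Ht H1 H2 Ha Hb. apply Rbar_le_eps. intros eps He.
replace (t * a + (1 - t) * b - eps) with (t * (a - eps) + (1 - t) * (b - eps)) by ring.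
assert (Ha' : Rbar_lt (Finite (a - eps)) (supproj n (w1 n)))
  by (eapply Rbar_lt_le_trans; eauto; apply Rbar_lt_fin; lra).
assert (Hb' : Rbar_lt (Finite (b - eps)) (supproj n (w2 n)))
  by (eapply Rbar_lt_le_trans; eauto; apply Rbar_lt_fin; lra).
destruct (Rbar_sup_approx _ _ Ha') as [e1 [[z1 [Hz1 [E1 ->]]] He1]].
destruct (Rbar_sup_approx _ _ Hb') as [e2 [[z2 [Hz2 [E2 ->]]] He2]].
eapply Rbar_le_trans; [apply (spf_conc X q1 Hq1_aff H HH_convex t _ _ z1 z2 Ht He1 He2)|].
apply Rbar_sup_ub. exists (paddT (pscalT t z1) (pscalT (1 - t) z2)).
split; [apply inLim_combo; auto|]. split; auto. unfold paddT, pscalT. rewrite E1, E2; auto.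
Qed.

Definition affine_on (a : PT X -> R) : Prop :=
  forall t x1 x2, X0 x1 -> X0 x2 ->
    a (paddT (pscalT t x1) (pscalT (1 - t) x2)) = t * a x1 + (1 - t) * a x2.
Definition majorant (a : PT X -> R) : Prop :=
  forall h x', H h -> X0 x' -> pleT h x' -> q h <= a x'.

Lemma dual_from_majorant (g : PT X -> Rbar) x r :
  concave_ext_on X0 g -> (forall w, X0 w -> g w = Finite (realpart (g w))) ->
  (forall w, X0 w -> Rbar_le (spf H q w) (g w)) ->
  X0 x -> Rbar_lt (g x) (Finite r) -> exists a, affine_on a /\ majorant a /\ a x < r.
Proof.
intros Hc Hfin Hge Hx Hr.
set (phi := fun w => realpart (g w)).
assert (Hconc := realpart_concave X0 g Hc Hfin X0_combo).
destruct (affine_support X X0 HX0_zero HX0_add HX0_scal phi Hconc x Hx) as [a [Ha1 [Ha2 Ha3]]].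
exists a; split; [exact Ha1|split].
- intros h x' Hh Hx' Hle.
  pose proof (Rbar_le_trans _ _ _ (spf_ge X q1 H h x' Hh Hle) (Hge x' Hx')) as Hq.
  rewrite (Hfin x' Hx') in Hq. simpl in Hq. specialize (Ha2 x' Hx'). unfold phi, q in *. lra.
- rewrite Ha3. unfold phi. rewrite (Hfin x Hx) in Hr. apply Rbar_lt_fin in Hr; auto.
Qed.

(* Case (i): if pr_n H is minorizing for pr_n X0, then f_n is finite on pr_n X0,
   since h in H below x_n gives the thread sup(h, x) mapping to x_n. *)
Lemma supproj_finite_of_minorizing n :
  (forall y : X n, (exists x, X0 x /\ x n = y) -> exists h, H h /\ vle (h n) y) ->
  forall w, X0 w -> supproj n (w n) = Finite (realpart (supproj n (w n))).
Proof.
intros Hmin w Hw. destruct (Hmin (w n) (ex_intro _ w (conj Hw eq_refl))) as [h [Hh Hhn]].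
set (z := psupT X h w).
assert (Hz : inLim X p z) by (apply inLim_sup; auto).
assert (Ezn : z n = w n) by (unfold z, psupT; rewrite vsup_comm; apply vsup_absorb; auto).
apply (supproj_finite n w (q h) (HX0_sub w Hw)).
eapply Rbar_le_trans; [apply (spf_ge X q1 H h z Hh)|].
- intros m. unfold z, psupT. apply vsup_ub_l.
- rewrite <- Ezn. apply supproj_ge_spf; auto.
Qed.

Definition Lq (y : PT X) : R := L0 (X 0%nat) q1 (y 0%nat).

Lemma Lq_add a b : Lq (paddT a b) = Lq a + Lq b.
Proof. unfold Lq, paddT. apply L0_add; auto. Qed.
Lemma Lq_scal t a : Lq (pscalT t a) = t * Lq a.
Proof. unfold Lq, pscalT. apply L0_scal; auto. Qed.
Lemma Lq_sub a b : Lq (psubT a b) = Lq a - Lq b.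
Proof. unfold psubT. rewrite Lq_add, Lq_scal. ring. Qed.
Lemma q_decomp v w : q v = q w + Lq v - Lq w.
Proof. unfold q, Lq, L0. ring. Qed.

Section SupConvolution.
Variable f : PT X -> Rbar.
Hypothesis f_concave : concave_ext_on X0 f.
Hypothesis f_le_q : forall w, X0 w -> Rbar_le (f w) (Finite (q w)).
Variable Phi : PT X -> R.
Hypothesis Phi_zero : Phi pzeroT = 0.
Hypothesis Phi_ge : forall y, - Lq y <= Phi y.
Hypothesis Phi_convex : forall t y1 y2, 0 <= t <= 1 ->
  Phi (paddT (pscalT t y1) (pscalT (1 - t) y2)) <= t * Phi y1 + (1 - t) * Phi y2.

Definition supconv (v : PT X) : Rbar :=
  Rbar_sup (fun e => exists w gw, X0 w /\ f w = Finite gw /\ e = Finite (gw - Phi (psubT v w))).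

Lemma supconv_le_q v : X0 v -> Rbar_le (supconv v) (Finite (q v)).
Proof.
intros Hv. apply Rbar_sup_lub. intros e [w [gw [Hw [Ew ->]]]]. simpl.
pose proof (f_le_q w Hw) as Hq. rewrite Ew in Hq; simpl in Hq.
pose proof (Phi_ge (psubT v w)). rewrite Lq_sub in H0. rewrite (q_decomp v w). lra.
Qed.

Lemma supconv_ge v : X0 v -> Rbar_le (f v) (supconv v).
Proof.
intros Hv. destruct (f v) as [gv| |] eqn:Ev.
- apply Rbar_sup_ub. exists v, gv. split; auto; split; auto.
  replace (psubT v v) with (@pzeroT X) by (vring; ring). rewrite Phi_zero. f_equal; ring.
- pose proof (f_le_q v Hv) as Hq. rewrite Ev in Hq. contradiction.
- simpl; auto.
Qed.

Lemma supconv_finite w0 g0 : X0 w0 -> f w0 = Finite g0 ->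
  forall v, X0 v -> supconv v = Finite (realpart (supconv v)).
Proof.
intros Hw0 Hg0 v Hv.
assert (Hlo : Rbar_le (Finite (g0 - Phi (psubT v w0))) (supconv v)).
{ apply Rbar_sup_ub. exists w0, g0; auto. }
pose proof (supconv_le_q v Hv) as Hup.
destruct (supconv v); simpl in *; auto; tauto.
Qed.

Lemma supconv_concave : concave_ext_on X0 supconv.
Proof.
intros t a b v1 v2 Ht H1 H2 Ha Hb. apply Rbar_le_eps. intros eps He.
assert (A1 : Rbar_lt (Finite (a - eps)) (supconv v1))
  by (eapply Rbar_lt_le_trans; eauto; apply Rbar_lt_fin; lra).
assert (A2 : Rbar_lt (Finite (b - eps)) (supconv v2))
  by (eapply Rbar_lt_le_trans; eauto; apply Rbar_lt_fin; lra).
destruct (Rbar_sup_approx _ _ A1) as [e1 [[w1 [gw1 [Hw1 [Ew1 ->]]]] He1]].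
destruct (Rbar_sup_approx _ _ A2) as [e2 [[w2 [gw2 [Hw2 [Ew2 ->]]]] He2]].
apply Rbar_lt_fin in He1. apply Rbar_lt_fin in He2.
set (w := paddT (pscalT t w1) (pscalT (1 - t) w2)).
assert (Hw : X0 w) by (apply X0_combo; auto).
assert (Hfw : Rbar_le (Finite (t * gw1 + (1 - t) * gw2)) (f w)).
{ apply f_concave; auto; [rewrite Ew1|rewrite Ew2]; apply Rbar_le_refl. }
destruct (f w) as [gw| |] eqn:Efw; [|pose proof (f_le_q w Hw) as Hq; rewrite Efw in Hq; contradiction|contradiction].
eapply Rbar_le_trans; [|apply Rbar_sup_ub; exists w, gw; split; [exact Hw|split; [exact Efw|reflexivity]]].
simpl in Hfw |- *.
replace (psubT (paddT (pscalT t v1) (pscalT (1 - t) v2)) w)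
  with (paddT (pscalT t (psubT v1 w1)) (pscalT (1 - t) (psubT v2 w2))) by (unfold w; vring; ring).
pose proof (Phi_convex t (psubT v1 w1) (psubT v2 w2) Ht). nra.
Qed.

End SupConvolution.

(* Case (ii): near a point x where f_n o pr_n is < c (by upper semicontinuity,
   on a ball of radius eps for the first k+1 seminorms of X_n), the penalty
   with N = (sum of those seminorms at level n)/eps and a weight M > q(x) - c
   makes the sup-convolution of f_n o pr_n at most c at x: nearby points have
   small values, far ones are penalized by M N. *)
Section UscCase.
Variables (n k : nat) (eps c : R) (x : PT X).
Hypothesis Heps : 0 < eps.
Hypothesis Hsmall : forall z, X0 z ->
  (forall i, (i <= k)%nat -> sn (X n) i (vsub (z n) (x n)) < eps) ->
  Rbar_lt (supproj n (z n)) (Finite c).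

Definition usc_norm (y : PT X) : R := sumsn (X n) k (y n) / eps.
Definition usc_weight : R := Rmax 0 (q x - c + 1).

Lemma usc_norm_nonneg y : 0 <= usc_norm y.
Proof.
unfold usc_norm, Rdiv. apply Rmult_le_pos; [apply sumsn_nonneg|apply Rlt_le, Rinv_0_lt_compat; lra].
Qed.

Lemma usc_norm_add a b : usc_norm (paddT a b) <= usc_norm a + usc_norm b.
Proof.
unfold usc_norm, paddT, Rdiv. rewrite <- Rmult_plus_distr_r.
apply Rmult_le_compat_r; [apply Rlt_le, Rinv_0_lt_compat; auto|apply sumsn_tri].
Qed.

Lemma usc_norm_scal t a : usc_norm (pscalT t a) = Rabs t * usc_norm a.
Proof. unfold usc_norm, pscalT. rewrite sumsn_homog. unfold Rdiv; ring. Qed.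

Lemma usc_weight_nonneg : 0 <= usc_weight.
Proof. apply Rmax_l. Qed.

Let usc_penalty := penalty X Lq usc_norm usc_weight.

Lemma usc_penalty_convex t y1 y2 : 0 <= t <= 1 ->
  usc_penalty (paddT (pscalT t y1) (pscalT (1 - t) y2)) <=
  t * usc_penalty y1 + (1 - t) * usc_penalty y2.
Proof.
apply penalty_convex; [apply Lq_add|apply Lq_scal|apply usc_norm_add|apply usc_norm_scal|
  apply usc_weight_nonneg].
Qed.

Lemma usc_penalty_ge y : - Lq y <= usc_penalty y.
Proof.
pose proof (penalty_ge X Lq usc_norm usc_weight y).
pose proof (usc_norm_nonneg y). pose proof usc_weight_nonneg.
unfold usc_penalty. nra.
Qed.

Lemma usc_supconv_at_x :
  Rbar_le (supconv (fun w => supproj n (w n)) usc_penalty x) (Finite c).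
Proof.
apply Rbar_sup_lub. intros e [w [gw [Hw [Ew ->]]]]. simpl.
pose proof (penalty_nonneg X Lq usc_norm usc_weight (psubT x w)) as HP0.
destruct (Rlt_le_dec (usc_norm (psubT w x)) 1) as [Hnear|Hfar].
- assert (Hlt : Rbar_lt (supproj n (w n)) (Finite c)).
  { apply Hsmall; auto. intros i Hi.
    apply Rle_lt_trans with (sumsn (X n) k ((psubT w x) n)).
    + unfold psubT, paddT, pscalT, vsub. rewrite vscal_m1. apply sumsn_ge; auto.
    + unfold usc_norm in Hnear. apply (Rmult_lt_compat_r eps) in Hnear; auto.
      unfold Rdiv in Hnear. rewrite Rmult_assoc, Rinv_l, Rmult_1_r in Hnear by lra. lra. }
  rewrite Ew in Hlt. apply Rbar_lt_fin in Hlt. unfold usc_penalty. lra.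
- assert (EN : usc_norm (psubT x w) = usc_norm (psubT w x)).
  { replace (psubT x w) with (pscalT (-1) (psubT w x)) by (vring; ring).
    rewrite usc_norm_scal, Rabs_left by lra. ring. }
  pose proof (penalty_ge X Lq usc_norm usc_weight (psubT x w)) as HPge.
  rewrite EN, Lq_sub in HPge.
  pose proof (supproj_le_q n w (HX0_sub _ Hw)) as Hq. rewrite Ew in Hq; simpl in Hq.
  rewrite (q_decomp w x) in Hq.
  assert (usc_weight * 1 <= usc_weight * usc_norm (psubT w x))
    by (apply Rmult_le_compat_l; [apply usc_weight_nonneg|auto]).
  assert (q x - c + 1 <= usc_weight) by apply Rmax_r.
  unfold usc_penalty. lra.
Qed.

End UscCase.

(* Case (ii): under upper semicontinuity of f_n on pr_n X0, f_n o pr_n has a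
   finite concave majorant which is still < r at x (if f_n = -oo on pr_n X0, a
   constant does). *)
Lemma usc_majorant n x r :
  usc_on (fun y : X n => exists x, X0 x /\ x n = y) (supproj n) ->
  X0 x -> Rbar_lt (supproj n (x n)) (Finite r) ->
  exists g, concave_ext_on X0 g /\ (forall w, X0 w -> g w = Finite (realpart (g w))) /\
    (forall w, X0 w -> Rbar_le (spf H q w) (g w)) /\ Rbar_lt (g x) (Finite r).
Proof.
intros Husc Hx Hr. set (f := fun w => supproj n (w n)).
assert (Hspf : forall w, X0 w -> Rbar_le (spf H q w) (f w))
  by (intros w Hw; apply supproj_ge_spf; auto).
destruct (classic (exists w0, X0 w0 /\ f w0 <> m_infty)) as [[w0 [Hw0 Hne]]|Hall].
2:{ exists (fun _ => Finite (r - 1)). split; [|split; [|split]].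
    - intros t a b w1 w2 Ht _ _ Ha Hb. simpl in *. nra.
    - reflexivity.
    - intros w Hw. assert (Hm : f w = m_infty) by (apply NNPP; intros Hn; apply Hall; eauto).
      pose proof (Hspf w Hw) as Hs. rewrite Hm in Hs. destruct (spf H q w); simpl in *; tauto.
    - apply Rbar_lt_fin; lra. }
assert (Hg0 : f w0 = Finite (realpart (f w0))).
{ pose proof (supproj_not_pinf n w0 (HX0_sub _ Hw0)). unfold f in *.
  destruct (supproj n (w0 n)); simpl; tauto. }
destruct (Rbar_lt_exists_real _ _ Hr) as [c [Hc1 Hc2]]. apply Rbar_lt_fin in Hc2.
destruct (Husc (x n) (ex_intro _ x (conj Hx eq_refl)) c Hc1) as [W [[k [eps [He HW]]] HWc]].
assert (Hsmall : forall z, X0 z ->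
  (forall i, (i <= k)%nat -> sn (X n) i (vsub (z n) (x n)) < eps) ->
  Rbar_lt (supproj n (z n)) (Finite c)) by (intros z Hz Hb; apply HWc; eauto).
assert (Hfc : concave_ext_on X0 f)
  by (intros t a b w1 w2 Ht H1 H2; apply supproj_concave; auto).
assert (Hfq : forall w, X0 w -> Rbar_le (f w) (Finite (q w)))
  by (intros w Hw; apply supproj_le_q; auto).
set (Phi := penalty X Lq (usc_norm n k eps) (usc_weight c x)).
assert (Phi0 : Phi pzeroT = 0).
{ apply penalty_zero; [apply Lq_scal|apply usc_norm_scal]. }
exists (supconv f Phi). split; [|split; [|split]].
- apply supconv_concave; auto. intros; apply usc_penalty_convex; auto.
- apply (supconv_finite f Hfq Phi (usc_penalty_ge n k eps c x He) w0 _ Hw0 Hg0).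
- intros w Hw. eapply Rbar_le_trans; [apply Hspf; auto|].
  apply supconv_ge; auto.
- eapply Rbar_le_lt_trans; [apply usc_supconv_at_x; auto|apply Rbar_lt_fin; auto].
Qed.

(* Step 1 (compactness).  Given h_j in H with h_j <= x at levels <= j and
   q(h_j) > r', hypothesis (iii) and a diagonal argument give a limit point in
   H below x with q >= r'. *)
Section Diagonal.
Variable x : PT X.
Hypothesis Hx : inLim X p x.
Variable r' : R.
Variable hs : nat -> PT X.
Hypothesis Hhs_H : forall j, H (hs j).
Hypothesis Hhs_le : forall j k, (k <= j)%nat -> vle (hs j k) (x k).
Hypothesis Hhs_q : forall j, r' < q (hs j).

(* running_sup k m = sup(x_k, h_0 k, ..., h_(m-1) k); along the diagonal it
   is a thread above x and all h_j (using h_j <= x below level j). *)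
Fixpoint running_sup (k m : nat) : X k :=
  match m with O => x k | S m' => vsup (running_sup k m') (hs m' k) end.

Lemma p_running_sup k m : p k (running_sup (S k) m) = running_sup k m.
Proof.
induction m; simpl.
- symmetry; apply Hx.
- rewrite Hregular, IHm, <- (HH_sub _ (Hhs_H m) k); auto.
Qed.

Lemma x_le_running_sup k m : vle (x k) (running_sup k m).
Proof. induction m; simpl; [apply vle_refl|]. eapply vle_trans; [apply IHm|apply vsup_ub_l]. Qed.

Lemma hs_le_running_sup j k m : (j < m)%nat -> vle (hs j k) (running_sup k m).
Proof.
induction m; intros Hj; [lia|]. simpl.
destruct (Nat.eq_dec j m) as [->|Hne]; [apply vsup_ub_r|].
eapply vle_trans; [apply IHm; lia|apply vsup_ub_l].
Qed.

Definition sup_thread : PT X := fun k => running_sup k k.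

Lemma sup_thread_inLim : inLim X p sup_thread.
Proof.
intros k. unfold sup_thread. rewrite p_running_sup. simpl. symmetry. apply vsup_absorb.
eapply vle_trans; [apply Hhs_le; auto|apply x_le_running_sup].
Qed.

Lemma sup_thread_bound j : pleT (hs j) sup_thread.
Proof.
intros k. unfold sup_thread. destruct (Nat.lt_ge_cases j k) as [Hj|Hj].
- apply hs_le_running_sup; auto.
- eapply vle_trans; [apply Hhs_le; auto|apply x_le_running_sup].
Qed.

Definition family (b : PT X) : Prop := exists j, hs j = b.

Definition select (m : nat) (w : nat -> X m) : nat -> nat :=
  epsilon (inhabits (fun i => i))
    (fun phi => (forall i, (phi i < phi (S i))%nat) /\ exists y, conv (fun i => w (phi i)) y).

Lemma select_spec m (w : nat -> X m) :
  seq_precompact (fun y : X m => exists b, family b /\ b m = y) ->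
  (forall i, exists j, hs j m = w i) ->
  (forall i, (select m w i < select m w (S i))%nat) /\ exists y, conv (fun i => w (select m w i)) y.
Proof.
intros Hpc Hw. unfold select. apply epsilon_spec.
destruct (Hpc w) as [phi [y [H1 H2]]].
- intros i. destruct (Hw i) as [j Hj]. exists (hs j); split; [exists j; auto|auto].
- exists phi; split; eauto.
Qed.

Section Subsequence.
Variable nq : nat.
Hypothesis Hnq : forall n, (nq <= n)%nat -> seq_precompact (fun y : X n => exists b, family b /\ b n = y).

(* nested k: a subsequence along which h converges at levels nq, ..., nq + k,
   each refining the previous one. *)
Fixpoint nested (k : nat) : nat -> nat :=
  match k with
  | O => select nq (fun j => hs j nq)
  | S k' => fun j => nested k' (select (S k' + nq)%nat (fun j => hs (nested k' j) (S k' + nq)%nat) j)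
  end.

Lemma nested_spec k : (forall i, (nested k i < nested k (S i))%nat) /\ exists y, conv (fun j => hs (nested k j) (k + nq)%nat) y.
Proof.
induction k.
- simpl. apply select_spec; [apply Hnq; lia|]. intros i; exists i; auto.
- destruct IHk as [Hinc _].
  destruct (select_spec (S k + nq)%nat (fun j => hs (nested k j) (S k + nq)%nat) ltac:(apply Hnq; lia)
     ltac:(intros i; exists (nested k i); auto)) as [Hs Hc].
  split.
  + intros i. simpl. apply (Nat.lt_le_trans _ (nested k (S (select (S (k + nq)%nat) (fun j => hs (nested k j) (S (k + nq)%nat)) i)))).
    * apply Hinc.
    * apply strict_mono; auto. apply Hs.
  + exact Hc.
Qed.

Lemma nested_shift d k : exists G : nat -> nat, (forall j, (j <= G j)%nat) /\ forall j, nested (d + k)%nat j = nested k (G j).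
Proof.
induction d.
- exists (fun j => j); split; auto.
- destruct IHd as [G [HG1 HG2]].
  set (sg := select (S (d + k)%nat + nq)%nat (fun j => hs (nested (d + k)%nat j) (S (d + k)%nat + nq)%nat)).
  assert (Hsg : forall i, (sg i < sg (S i))%nat).
  { apply (select_spec (S (d + k)%nat + nq)%nat); [apply Hnq; lia|]. intros i; exists (nested (d+k) i); auto. }
  exists (fun j => G (sg j)). split.
  + intros j. eapply Nat.le_trans; [apply (strict_ge sg Hsg)|apply HG1].
  + intros j. simpl. fold sg. apply HG2.
Qed.

(* The diagonal subsequence, which converges at every level >= nq ... *)
Definition diag (j : nat) : nat := nested j j.

Lemma diag_ge j : (j <= diag j)%nat.
Proof. unfold diag. apply strict_ge. apply nested_spec. Qed.

Lemma conv_diag_high k : exists y, conv (fun j => hs (diag j) (k + nq)%nat) y.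
Proof.
destruct (nested_spec k) as [_ [y Hy]]. exists y.
intros W HW. destruct (Hy W HW) as [N HN]. exists (N + k)%nat. intros j Hj.
destruct (nested_shift (j - k) k) as [G [HG1 HG2]].
assert (Ej : diag j = nested k (G (j - k + k)%nat)).
{ unfold diag. rewrite <- HG2. replace (j - k + k)%nat with j by lia. auto. }
rewrite Ej. apply HN. specialize (HG1 (j - k + k)%nat). lia.
Qed.

(* ... and hence at every level, by continuity of the positive maps p_n. *)
Lemma conv_diag m : exists y, conv (fun j => hs (diag j) m) y.
Proof.
assert (Hd : forall d m, (m + d = nq)%nat -> exists y, conv (fun j => hs (diag j) m) y).
{ intros d. induction d; intros m' Hm'.
  - replace m' with (0 + nq)%nat by lia. apply conv_diag_high.
  - destruct (IHd (S m') ltac:(lia)) as [y Hy]. exists (p m' y).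
    pose proof (cont_seq _ _ (p m') (Hp_pos m') _ _ Hy) as Hc.
    intros W HW. destruct (Hc W HW) as [N HN]. exists N. intros j Hj.
    rewrite (HH_sub _ (Hhs_H (diag j)) m'). apply HN; auto. }
destruct (Nat.le_gt_cases nq m) as [Hm|Hm].
- replace m with ((m - nq) + nq)%nat by lia. apply conv_diag_high.
- apply (Hd (nq - m)%nat). lia.
Qed.

Definition diag_limit : PT X := fun m => epsilon (inhabits vzero) (fun y => conv (fun j => hs (diag j) m) y).

Lemma diag_limit_conv m : conv (fun j => hs (diag j) m) (diag_limit m).
Proof. unfold diag_limit. apply epsilon_spec. apply conv_diag. Qed.

Lemma diag_limit_inLim : inLim X p diag_limit.
Proof.
intros m. apply (conv_unique (fun j => hs (diag j) m)); [apply diag_limit_conv|].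
pose proof (cont_seq _ _ (p m) (Hp_pos m) _ _ (diag_limit_conv (S m))) as Hc.
intros W HW. destruct (Hc W HW) as [N HN]. exists N. intros j Hj.
rewrite (HH_sub _ (Hhs_H (diag j)) m). apply HN; auto.
Qed.

Lemma diag_limit_H : H diag_limit.
Proof.
apply (HH_seqclosed (fun j => hs (diag j))); auto.
- apply diag_limit_inLim.
- intros m; apply diag_limit_conv.
Qed.

Lemma diag_limit_le : pleT diag_limit x.
Proof.
intros k. apply (conv_le (fun j => hs (diag j) k)); [apply diag_limit_conv|].
exists k. intros j Hj. apply Hhs_le. pose proof (diag_ge j); lia.
Qed.

Lemma diag_limit_q : r' <= q diag_limit.
Proof.
apply Rnot_lt_le. intros Hlt.
destruct (cont_seq_R (X 0%nat) (L0 (X 0%nat) q1) (L0_add _ q1 Hq1_aff) (L0_scal _ q1 Hq1_aff)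
   (L0_pos _ q1 Hq1_aff Hq1_pos) _ _ (diag_limit_conv 0%nat) (r' - q diag_limit) ltac:(lra)) as [N HN].
specialize (HN N (le_n _)). specialize (Hhs_q (diag N)).
unfold L0, q in *. apply Rabs_def2 in HN. lra.
Qed.

End Subsequence.

Lemma diagonal_limit_point : exists y, H y /\ pleT y x /\ r' <= q y.
Proof.
destruct (Hiii family) as [nq Hnq].
- intros b [j <-]; apply Hhs_H.
- exists hs. intros b [j Hj]; exists j; auto.
- exists sup_thread. split; [apply sup_thread_inLim|]. intros b [j <-]. apply sup_thread_bound.
- exists r'. intros b [j <-]. apply Rlt_le. apply Hhs_q.
- exists (diag_limit nq).
  split; [|split]; [apply diag_limit_H|apply diag_limit_le|apply diag_limit_q]; exact Hnq.
Qed.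

End Diagonal.

Lemma approximants x r' : inLim X p x -> (forall n, Rbar_lt (Finite r') (supproj n (x n))) ->
  exists hs : nat -> PT X, (forall j, H (hs j)) /\
    (forall j k, (k <= j)%nat -> vle (hs j k) (x k)) /\ (forall j, r' < q (hs j)).
Proof.
intros Hx Hall.
assert (Hex : forall j, exists h, H h /\ (forall k, (k <= j)%nat -> vle (h k) (x k)) /\ r' < q h).
{ intros j. destruct (Rbar_sup_approx _ _ (Hall j)) as [e [[z [Hz [Ezj ->]]] He]].
  destruct (spf_approx X q1 H r' z He) as [h [Hh [Hle Hq]]].
  exists h. split; auto; split; auto. intros k Hk.
  rewrite <- (inLim_eq_le X p z x j k Hz Hx Hk Ezj). apply Hle. }
apply choice in Hex. destruct Hex as [hs Hhs].
exists hs; split; [|split]; intros; apply Hhs; auto.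
Qed.

Lemma compactness_step x r : inLim X p x -> Rbar_lt (spf H q x) (Finite r) ->
  exists n, Rbar_lt (supproj n (x n)) (Finite r).
Proof.
intros Hx Hr. apply NNPP; intros Hn.
destruct (Rbar_lt_exists_real _ _ Hr) as [r' [Hr1 Hr2]]. apply Rbar_lt_fin in Hr2.
assert (Hall : forall n, Rbar_lt (Finite r') (supproj n (x n))).
{ intros n. destruct (Rbar_le_dec (Finite r) (supproj n (x n))) as [H1|H1].
  - eapply Rbar_lt_le_trans; [apply Rbar_lt_fin; eauto|exact H1].
  - exfalso; apply Hn; eauto. }
destruct (approximants x r' Hx Hall) as [hs [Hhs_H [Hhs_le Hhs_q]]].
destruct (diagonal_limit_point x Hx r' hs Hhs_H Hhs_le Hhs_q) as [y [Hy [Hyx Hyq]]].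
apply (Rbar_lt_not_le _ _ Hr1). eapply Rbar_le_trans; [|apply (spf_ge X q1 H y x Hy Hyx)].
simpl. unfold q in Hyq. lra.
Qed.

Lemma spf_dual x r : X0 x -> Rbar_lt (spf H q x) (Finite r) ->
  exists a, affine_on a /\ majorant a /\ a x < r.
Proof.
intros Hx Hr. destruct (compactness_step x r (HX0_sub x Hx) Hr) as [n Hn].
destruct (Hi_ii n) as [Hmin|Husc].
- apply (dual_from_majorant (fun w => supproj n (w n))); auto.
  + intros t a b w1 w2 Ht H1 H2. apply supproj_concave; auto.
  + apply supproj_finite_of_minorizing; auto.
  + intros w Hw. apply supproj_ge_spf; auto.
- destruct (usc_majorant n x r Husc Hx Hn) as [g [Hg1 [Hg2 [Hg3 Hg4]]]].
  apply (dual_from_majorant g); auto.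
Qed.

Lemma spf_le_majorant a x : majorant a -> X0 x -> Rbar_le (spf H q x) (Finite (a x)).
Proof. intros Ha Hx. apply Rbar_sup_lub. intros e [h [Hh [Hle ->]]]. simpl. apply Ha; auto. Qed.

Lemma spf_dual_formula x : X0 x ->
  spf H q x = Rbar_inf (fun e => exists a : PT X -> R,
     (forall t x1 x2, X0 x1 -> X0 x2 ->
        a (paddT (pscalT t x1) (pscalT (1 - t) x2)) = t * a x1 + (1 - t) * a x2) /\
     (forall h x', H h -> X0 x' -> pleT h x' -> q h <= a x') /\
     e = Finite (a x)).
Proof.
intros Hx. symmetry. apply Rbar_inf_approx.
- intros e [a [_ [Hmaj ->]]]. apply spf_le_majorant; auto.
- intros r Hr. destruct (spf_dual x r Hx Hr) as [a [Ha1 [Ha2 Ha3]]].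
  exists (a x); split; auto. exists a; auto.
Qed.

Lemma affine_scal a t x1 : affine_on a -> X0 x1 ->
  a (pscalT t x1) = t * a x1 + (1 - t) * a pzeroT.
Proof. intros Ha H1. rewrite <- Ha by auto. f_equal. vring; ring. Qed.

Lemma affine_add a x1 x2 : affine_on a -> X0 x1 -> X0 x2 ->
  a (paddT x1 x2) = a x1 + a x2 - a pzeroT.
Proof.
intros Ha H1 H2.
replace (paddT x1 x2) with (paddT (pscalT (/2) (pscalT 2 x1)) (pscalT (1 - /2) (pscalT 2 x2)))
  by (vring; field).
rewrite Ha by auto. rewrite !(affine_scal a 2) by auto. field.
Qed.

(* When 0 in H and q(0) >= 0, an affine majorant a splits as l + c with l = a - a(0)
   positive linear (a is bounded below by q(0) on the positive cone) and c = a(0) >= 0. *)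
Lemma positive_split a : affine_on a -> majorant a -> H pzeroT -> 0 <= q1 vzero ->
  (forall x1 x2, X0 x1 -> X0 x2 ->
     a (paddT x1 x2) - a pzeroT = (a x1 - a pzeroT) + (a x2 - a pzeroT)) /\
  (forall b x1, X0 x1 -> a (pscalT b x1) - a pzeroT = b * (a x1 - a pzeroT)) /\
  (forall x1, X0 x1 -> pleT pzeroT x1 -> 0 <= a x1 - a pzeroT) /\
  0 <= a pzeroT.
Proof.
intros Haff Hmaj H0 Hq0. split; [|split; [|split]].
- intros x1 x2 H1 H2. rewrite affine_add; auto. ring.
- intros b x1 H1. rewrite affine_scal; auto. ring.
- intros x1 H1 Hp1. apply (ray_lower_bound (a pzeroT) _ (q pzeroT)). intros t Ht.
  assert (Hpos : pleT pzeroT (pscalT t x1)).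
  { intros n. unfold pscalT. apply vle_scal; [lra|apply Hp1]. }
  pose proof (Hmaj pzeroT (pscalT t x1) H0 (HX0_scal t x1 H1) Hpos) as Hq.
  rewrite affine_scal in Hq; auto. lra.
- eapply Rle_trans; [apply Hq0|]. apply (Hmaj pzeroT pzeroT H0 HX0_zero). intros n; apply vle_refl.
Qed.

Lemma spf_positive_dual_formula x : H pzeroT -> 0 <= q1 vzero -> X0 x ->
  spf H q x = Rbar_inf (fun e => exists (l : PT X -> R) (c : R),
     (forall x1 x2, X0 x1 -> X0 x2 -> l (paddT x1 x2) = l x1 + l x2) /\
     (forall a x1, X0 x1 -> l (pscalT a x1) = a * l x1) /\
     (forall x1, X0 x1 -> pleT pzeroT x1 -> 0 <= l x1) /\
     0 <= c /\
     (forall h x', H h -> X0 x' -> pleT h x' -> q h <= l x' + c) /\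
     e = Finite (l x + c)).
Proof.
intros H0 Hq0 Hx. symmetry. apply Rbar_inf_approx.
- intros e [l [c [_ [_ [_ [_ [Hmaj ->]]]]]]].
  apply (spf_le_majorant (fun y => l y + c)); auto.
- intros r Hr. destruct (spf_dual x r Hx Hr) as [a [Ha1 [Ha2 Ha3]]].
  destruct (positive_split a Ha1 Ha2 H0 Hq0) as [Hl1 [Hl2 [Hl3 Hc]]].
  exists (a x). split; [|exact Ha3].
  exists (fun y => a y - a pzeroT), (a pzeroT). repeat split; auto.
  + intros h x' Hh Hx' Hle. replace (a x' - a pzeroT + a pzeroT) with (a x') by ring. apply Ha2; auto.
  + f_equal; ring.
Qed.

End Duality.

Theorem mainTheorem12
  (X : nat -> FrechetLattice) (p : forall n, X (S n) -> X n)
  (Hp_pos : forall n, positive_linear (p n))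
  (Hregular : forall n (x y : X (S n)), p n (vsup x y) = vsup (p n x) (p n y))
  (Hreduced : forall n (y : X n), exists x, inLim X p x /\ x n = y)
  (X0 : PT X -> Prop)
  (HX0_sub : forall x, X0 x -> inLim X p x)
  (HX0_zero : X0 pzeroT)
  (HX0_add : forall x y, X0 x -> X0 y -> X0 (paddT x y))
  (HX0_scal : forall a x, X0 x -> X0 (pscalT a x))
  (q1 : X 0%nat -> R)
  (Hq1_aff : forall t (y1 y2 : X 0%nat),
      q1 (vadd (vscal t y1) (vscal (1 - t) y2)) = t * q1 y1 + (1 - t) * q1 y2)
  (Hq1_pos : forall y : X 0%nat, vle vzero y -> 0 <= q1 y)
  (H : PT X -> Prop)
  (HH_sub : forall h, H h -> inLim X p h)
  (HH_convex : forall t h1 h2, 0 <= t <= 1 -> H h1 -> H h2 ->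
      H (paddT (pscalT t h1) (pscalT (1 - t) h2)))
  (HH_seqclosed : forall (u : nat -> PT X) x,
      (forall m, H (u m)) -> inLim X p x -> convT u x -> H x)
  (Hi_ii : forall n,
      (forall y : X n, (exists x, X0 x /\ x n = y) ->
         exists h, H h /\ vle (h n) y)
      \/
      usc_on (fun y : X n => exists x, X0 x /\ x n = y)
        (fun y : X n => Rbar_sup (fun e => exists x, inLim X p x /\ x n = y /\
                                     e = spf H (fun z => q1 (z 0%nat)) x)))
  (Hiii : forall B : PT X -> Prop,
      (forall b, B b -> H b) ->
      (exists f : nat -> PT X, forall b, B b -> exists k, f k = b) ->
      (exists u, inLim X p u /\ forall b, B b -> pleT b u) ->
      (exists m : R, forall b, B b -> m <= q1 (b 0%nat)) ->
      exists nq, forall n, (nq <= n)%nat ->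
        seq_precompact (fun y : X n => exists b, B b /\ b n = y)) :
  let q := fun z : PT X => q1 (z 0%nat) in
  concave_Rbar_on (inLim X p) (spf H q) /\
  (forall x, X0 x ->
     spf H q x =
     Rbar_inf (fun e => exists a : PT X -> R,
        (forall t x1 x2, X0 x1 -> X0 x2 ->
           a (paddT (pscalT t x1) (pscalT (1 - t) x2)) = t * a x1 + (1 - t) * a x2) /\
        (forall h x', H h -> X0 x' -> pleT h x' -> q h <= a x') /\
        e = Finite (a x))) /\
  (H pzeroT -> 0 <= q1 vzero ->
     (forall x, inLim X p x -> pleT pzeroT x -> Rbar_le (Finite 0) (spf H q x)) /\
     (forall x, X0 x ->
        spf H q x =
        Rbar_inf (fun e => exists (l : PT X -> R) (c : R),
           (forall x1 x2, X0 x1 -> X0 x2 -> l (paddT x1 x2) = l x1 + l x2) /\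
           (forall a x1, X0 x1 -> l (pscalT a x1) = a * l x1) /\
           (forall x1, X0 x1 -> pleT pzeroT x1 -> 0 <= l x1) /\
           0 <= c /\
           (forall h x', H h -> X0 x' -> pleT h x' -> q h <= l x' + c) /\
           e = Finite (l x + c)))).
Proof.
intros q. split; [|split].
- apply (spf_concave_Rbar X q1 Hq1_aff Hq1_pos H HH_convex).
- intros x Hx. eapply (spf_dual_formula X p); eauto.
- intros H0 Hq0. split.
  + intros x _ Hpos. eapply Rbar_le_trans; [|apply (spf_ge X q1 H pzeroT x H0 Hpos)]. exact Hq0.
  + intros x Hx. eapply (spf_positive_dual_formula X p); eauto.
Qed.
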